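(* Let $n\in\mathbb{N}$, $a,b\in\mathbb{C}$ with $b\notin\mathbb{Z}^-$, and let $c\in\mathbb{C}$. (i) If $c\neq0$, then \[ \frac{1}{n+b+1}\sum_{j=0}^{n}\sum_{i=0}^{j}\frac{\binom{n+a+1}{i}}{\binom{n+b}{j}}\,c^{i-j} =\frac{1}{b+1}\sum_{k=0}^{n}\sum_{j=0}^{k}\frac{\binom{k+a}{j}}{\binom{k+b+1}{k}}\,c^{j-k}. \] (ii) If $|c+1|>1$, $a-b\notin\{0,-1,-2,\dots\}$ and $a\notin\mathbb{Z}^-$, then \[ \frac{(a-b)(c+1)}{(n+b+1)c}\sum_{j=0}^{n}\sum_{i=0}^{j}\frac{\binom{n+a+1}{i}}{\binom{n+b}{j}}\,c^{i-j} =\frac{(a+1)_{n+1}}{(b+1)_{n+1}}\;{}_3F_2\!\left(1,a-b,n+a+2;\,a-b+1,a+1;\,\tfrac{1}{c+1}\right)-{}_2F_1\!\left(1,a-b;\,a-b+1;\,\tfrac{1}{c+1}\right). \] (iii) If $|c+1|>1$ and $a=b-m$ with $m\in\mathbb{N}$, then \[ \frac{(c+1)^{b-a+1}}{(n+b+1)c}\sum_{j=0}^{n}\sum_{i=0}^{j}\frac{\binom{n+a+1}{i}}{\binom{n+b}{j}}\,c^{i-j} =\frac{n+b+2}{(b+1)(c+1)}\,{}_3F_2\!\left(1,1,n+b+3;\,2,b+2;\,\tfrac{1}{c+1}\right)+\psi(n+b+2)-\psi(b+1)+\log\frac{c}{c+1}-\sum_{\ell=1}^{b-a}\frac{(c+1)^{\ell}}{\ell}\left(\frac{(b+1-\ell)_{n+1}}{(b+1)_{n+1}}-1\right).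 \]
   Context: For $x\in\mathbb{C}$, $i\in\mathbb{N}$: $\binom{x}{i}=x(x-1)\cdots(x-i+1)/i!$. $\mathbb{Z}^-=\{-1,-2,\dots\}$. Pochhammer symbol: $(\alpha)_0=1$, $(\alpha)_k=\alpha(\alpha+1)\cdots(\alpha+k-1)$. Hypergeometric functions: ${}_2F_1(a,b;c;z)=\sum_{k\ge0}\frac{(a)_k(b)_k}{(c)_k}\frac{z^k}{k!}$ and ${}_3F_2(a,b,c;d,e;z)=\sum_{k\ge0}\frac{(a)_k(b)_k(c)_k}{(d)_k(e)_k}\frac{z^k}{k!}$, convergent for $|z|<1$. $\psi=\Gamma'/\Gamma$ is the digamma function (so $\psi(n+b+2)-\psi(b+1)=\sum_{k=1}^{n+1}\frac{1}{b+k}$), and $\log$ is the principal branch. (The paper asserts (ii),(iii) for all $c\notin\{-1,0\}$ with the hypergeometric functions understood by analytic continuation; here they are stated in the region $|c+1|>1$ where the series converge.) *)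

From Stdlib Require Import Reals Lra Arith ClassicalEpsilon.
Open Scope R_scope.

Record Cx : Type := mkC { Re : R ; Im : R }.

Declare Scope C_scope.
Delimit Scope C_scope with Cx.
Bind Scope C_scope with Cx.

Definition RtoC (x : R) : Cx := mkC x 0.
Coercion RtoC : R >-> Cx.
Definition Ci : Cx := mkC 0 1.

Definition Cadd (z w : Cx) : Cx := mkC (Re z + Re w) (Im z + Im w).
Definition Copp (z : Cx) : Cx := mkC (- Re z) (- Im z).
Definition Csub (z w : Cx) : Cx := Cadd z (Copp w).
Definition Cmul (z w : Cx) : Cx :=
  mkC (Re z * Re w - Im z * Im w) (Re z * Im w + Im z * Re w).
Definition Cinv (z : Cx) : Cx :=
  let d := Re z * Re z + Im z * Im z in mkC (Re z / d) (- Im z / d).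
Definition Cdiv (z w : Cx) : Cx := Cmul z (Cinv w).
Fixpoint Cpow (z : Cx) (n : nat) : Cx :=
  match n with O => RtoC 1 | S k => Cmul (Cpow z k) z end.
Definition Cnorm (z : Cx) : R := sqrt (Re z * Re z + Im z * Im z).
Definition CofNat (n : nat) : Cx := RtoC (INR n).

Infix "+" := Cadd : C_scope.
Infix "-" := Csub : C_scope.
Notation "- x" := (Copp x) : C_scope.
Infix "*" := Cmul : C_scope.
Infix "/" := Cdiv : C_scope.
Infix "^" := Cpow : C_scope.

Fixpoint Csum (n : nat) (f : nat -> Cx) : Cx :=
  match n with O => RtoC 0 | S k => Cadd (Csum k f) (f k) end.

Fixpoint Cfall (x : Cx) (i : nat) : Cx :=
  match i with O => RtoC 1 | S k => Cmul (Cfall x k) (Csub x (CofNat k)) end.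
Definition Cbinom (x : Cx) (i : nat) : Cx := Cdiv (Cfall x i) (CofNat (fact i)).

Fixpoint Cpoch (a : Cx) (k : nat) : Cx :=
  match k with O => RtoC 1 | S j => Cmul (Cpoch a j) (Cadd a (CofNat j)) end.

Definition Cseries_cv (u : nat -> Cx) (l : Cx) : Prop :=
  Un_cv (fun N => Re (Csum N u)) (Re l) /\ Un_cv (fun N => Im (Csum N u)) (Im l).

Definition Cseries_value (u : nat -> Cx) : Cx :=
  epsilon (inhabits (RtoC 0)) (fun l => Cseries_cv u l).

Definition F21 (a b c z : Cx) : Cx :=
  Cseries_value (fun k =>
    Cdiv (Cmul (Cmul (Cpoch a k) (Cpoch b k)) (Cpow z k))
         (Cmul (Cpoch c k) (CofNat (fact k)))).

Definition F32 (a b c d e z : Cx) : Cx :=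
  Cseries_value (fun k =>
    Cdiv (Cmul (Cmul (Cmul (Cpoch a k) (Cpoch b k)) (Cpoch c k)) (Cpow z k))
         (Cmul (Cmul (Cpoch d k) (Cpoch e k)) (CofNat (fact k)))).

(* principal argument in (-pi, pi] and principal logarithm *)
Definition Carg (z : Cx) : R :=
  let x := Re z in let y := Im z in
  if Rlt_dec 0 x then atan (y / x)
  else if Rlt_dec x 0 then
    (if Rle_dec 0 y then atan (y / x) + PI else atan (y / x) - PI)
  else if Rlt_dec 0 y then PI / 2
  else if Rlt_dec y 0 then - (PI / 2)
  else 0.
Definition Clog (z : Cx) : Cx := mkC (ln (Cnorm z)) (Carg z).

Definition EulerGamma : R :=
  epsilon (inhabits 0)
    (fun g => Un_cv (fun n => sum_f_R0 (fun k => / INR (S k)) n - ln (INR (S n))) g).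
Definition Cdigamma (z : Cx) : Cx :=
  Cadd (RtoC (- EulerGamma))
       (Cseries_value (fun k =>
          Csub (Cinv (CofNat (S k))) (Cinv (Cadd (CofNat k) z)))).

Definition Sdouble (n : nat) (a b c : Cx) : Cx :=
  Csum (S n) (fun j => Csum (S j) (fun i =>
    Cmul (Cdiv (Cbinom (Cadd (CofNat (S n)) a) i) (Cbinom (Cadd (CofNat n) b) j))
         (Cdiv (Cpow c i) (Cpow c j)))).

From Stdlib Require Import Reals Lra Arith Lia ClassicalEpsilon.
From Coquelicot Require Import Rcomplements Rbar Hierarchy Series PSeries Derive AutoDerive.

(** Put [z = 1/(c+1)], so that [1/c = z/(1-z)].  Since
    [sum_K binom(K,m) z^K = z^m/(1-z)^(m+1) = ((c+1)/c) (1/c)^m], the function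
    [((c+1)/c) Sdouble n a b c] is the power series in [z] whose coefficients are
    the binomial moments [sum_m X_m binom(K,m)] of the coefficients [X_m] of
    [Sdouble] as a polynomial in [1/c].  By Chu-Vandermonde the [K]-th moment is
    [sum_(j<=n) binom(n+a+1+K, j)/binom(n+b, j)], and writing binomials as
    Pochhammer symbols turns it into
    [(n+b+1) ((a+K+1)_(n+1) - (b+1)_(n+1)) / ((a-b+K) (b+1)_(n+1))], a divided
    difference of the Pochhammer polynomial.
    (i) The right-hand double sum has the same moments up to the factor
    [(b+1)/(n+b+1)], and the moments [K = 0..n] determine a polynomial of
    degree [<= n] since [binom(K,m)] is triangular.
    (ii) Splitting the divided difference gives the [3F2] and [2F1] series.
    (iii) For [a = b - m] the moment [K = m] is the [0/0] case of the divided
    difference, namely [(b+1)_(n+1) sum_i 1/(b+1+i)], a difference of digamma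
    values; the moments [K < m] give the finite sum, and those [K > m] the
    [3F2] series plus [sum_k z^k/k = -log(1 - z)]. *)

Open Scope C_scope.

Lemma Cx_ext (z w : Cx) : Re z = Re w -> Im z = Im w -> z = w.
Proof. destruct z, w; simpl; intros; subst; reflexivity. Qed.

Lemma Cx_ring : ring_theory (RtoC 0) (RtoC 1) Cadd Cmul Csub Copp (@eq Cx).
Proof. constructor; intros; apply Cx_ext; simpl; ring. Qed.

Lemma RtoC_1_neq_0 : RtoC 1 <> RtoC 0.
Proof. intro H. injection H. lra. Qed.

Lemma Cx_field : field_theory (RtoC 0) (RtoC 1) Cadd Cmul Csub Copp Cdiv Cinv (@eq Cx).
Proof.
  constructor.
  - exact Cx_ring.
  - exact RtoC_1_neq_0.
  - reflexivity.
  - intros [x y] Hp.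
    assert (Hd : (x * x + y * y <> 0)%R).
    { intro H. apply Hp.
      assert (x = 0 /\ y = 0)%R as [-> ->] by nra. reflexivity. }
    apply Cx_ext; unfold Cinv, Cmul; simpl; field; exact Hd.
Qed.

Add Field Cxfield : Cx_field.

Lemma Cmul_neq0 (z w : Cx) : z <> RtoC 0 -> w <> RtoC 0 -> z * w <> RtoC 0.
Proof.
  intros Hz Hw E. apply RtoC_1_neq_0.
  replace (RtoC 1) with (z * w * (Cinv z * Cinv w)) by (field; auto).
  rewrite E. ring.
Qed.
Lemma Cdiv_neq0 (z w : Cx) : z <> RtoC 0 -> w <> RtoC 0 -> z / w <> RtoC 0.
Proof.
  intros Hz Hw E. apply Hz. replace z with (z / w * w) by (field; auto). rewrite E. ring.
Qed.

Lemma RtoC_add (x y : R) : RtoC (x + y) = RtoC x + RtoC y.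
Proof. apply Cx_ext; simpl; ring. Qed.
Lemma RtoC_mul (x y : R) : RtoC (x * y) = RtoC x * RtoC y.
Proof. apply Cx_ext; simpl; ring. Qed.
Lemma RtoC_sub (x y : R) : RtoC (x - y) = RtoC x - RtoC y.
Proof. apply Cx_ext; simpl; ring. Qed.
Lemma RtoC_inj (x y : R) : RtoC x = RtoC y -> x = y.
Proof. intro H; injection H; auto. Qed.
Lemma RtoC_neq (x y : R) : x <> y -> RtoC x <> RtoC y.
Proof. intros H H'; apply H, RtoC_inj, H'. Qed.
Lemma Cinv_RtoC (x : R) : x <> 0%R -> Cinv (RtoC x) = RtoC (/ x).
Proof. intros H. apply Cx_ext; simpl; field; auto. Qed.

Lemma Cx_eq_dec (z w : Cx) : {z = w} + {z <> w}.
Proof.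
  destruct z as [x y], w as [x' y'].
  destruct (Req_dec_T x x'); destruct (Req_dec_T y y'); subst; auto;
  right; intro H; injection H; auto.
Qed.

Lemma CofNat_0 : CofNat 0 = RtoC 0.
Proof. reflexivity. Qed.
Lemma CofNat_S (k : nat) : CofNat (S k) = CofNat k + RtoC 1.
Proof. unfold CofNat. rewrite S_INR. apply RtoC_add. Qed.
Lemma CofNat_add (p q : nat) : CofNat (p + q) = CofNat p + CofNat q.
Proof. unfold CofNat. rewrite plus_INR. apply RtoC_add. Qed.
Lemma CofNat_sub (p q : nat) : (q <= p)%nat -> CofNat (p - q) = CofNat p - CofNat q.
Proof.
  intros H. replace (CofNat p) with (CofNat ((p - q) + q)) by (f_equal; lia).
  rewrite CofNat_add. ring.
Qed.
Lemma CofNat_fact_S (j : nat) : CofNat (fact (S j)) = CofNat (S j) * CofNat (fact j).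
Proof. unfold CofNat. rewrite <- RtoC_mul, <- mult_INR. reflexivity. Qed.
Lemma CofNat_S_neq0 (k : nat) : CofNat (S k) <> RtoC 0.
Proof. apply RtoC_neq, not_0_INR. lia. Qed.
Lemma CofNat_fact_neq0 (k : nat) : CofNat (fact k) <> RtoC 0.
Proof. apply RtoC_neq, INR_fact_neq_0. Qed.

Lemma Cpow_add (c : Cx) (p q : nat) : c ^ (p + q) = c ^ p * c ^ q.
Proof.
  induction q; simpl.
  - rewrite Nat.add_0_r. ring.
  - rewrite Nat.add_succ_r; simpl. rewrite IHq. ring.
Qed.
Lemma Cpow_mul (c d : Cx) (k : nat) : (c * d) ^ k = c ^ k * d ^ k.
Proof. induction k; simpl. ring. rewrite IHk. ring. Qed.
Lemma Cpow_1_l (m : nat) : RtoC 1 ^ m = RtoC 1.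
Proof. induction m; simpl. reflexivity. rewrite IHm. ring. Qed.
Lemma Cpow_RtoC (x : R) (k : nat) : RtoC x ^ k = RtoC (x ^ k).
Proof. induction k; simpl. reflexivity. rewrite IHk, <- RtoC_mul. f_equal; ring. Qed.
Lemma Cpow_neq0 (c : Cx) (k : nat) : c <> RtoC 0 -> c ^ k <> RtoC 0.
Proof.
  intros Hc; induction k; simpl; [apply RtoC_1_neq_0 | apply Cmul_neq0; auto].
Qed.
Lemma Cpow_div (u w : Cx) (m : nat) : w <> RtoC 0 -> (u / w) ^ m = u ^ m / w ^ m.
Proof.
  intros Hw. induction m; simpl.
  - field. apply RtoC_1_neq_0.
  - rewrite IHm. field. split; auto. apply Cpow_neq0; auto.
Qed.
Lemma Cpow_div_le (c : Cx) (i j : nat) : c <> RtoC 0 -> (i <= j)%nat ->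
  c ^ i / c ^ j = (RtoC 1 / c) ^ (j - i).
Proof.
  intros Hc Hij. rewrite Cpow_div, Cpow_1_l by auto.
  replace j with (i + (j - i))%nat at 1 by lia. rewrite Cpow_add.
  field. split; apply Cpow_neq0; auto.
Qed.
Lemma Cpow_mul_eq1 (w v : Cx) (p : nat) : w * v = RtoC 1 -> w ^ p * v ^ p = RtoC 1.
Proof. intros H. rewrite <- Cpow_mul, H. apply Cpow_1_l. Qed.

Lemma Csum_ext (n : nat) (f g : nat -> Cx) :
  (forall k, (k < n)%nat -> f k = g k) -> Csum n f = Csum n g.
Proof.
  induction n; intros H; simpl; auto.
  rewrite IHn by (intros; apply H; lia). rewrite H by lia. reflexivity.
Qed.
Lemma Csum_add (n : nat) (f g : nat -> Cx) :
  Csum n (fun k => f k + g k) = Csum n f + Csum n g.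
Proof. induction n; simpl. ring. rewrite IHn. ring. Qed.
Lemma Csum_sub (n : nat) (f g : nat -> Cx) :
  Csum n (fun k => f k - g k) = Csum n f - Csum n g.
Proof. induction n; simpl. ring. rewrite IHn. ring. Qed.
Lemma Csum_scal (n : nat) (c : Cx) (f : nat -> Cx) :
  Csum n (fun k => c * f k) = c * Csum n f.
Proof. induction n; simpl. ring. rewrite IHn. ring. Qed.
Lemma Csum_zero (n : nat) (f : nat -> Cx) :
  (forall k, (k < n)%nat -> f k = RtoC 0) -> Csum n f = RtoC 0.
Proof.
  induction n; intros H; simpl; auto.
  rewrite IHn by (intros; apply H; lia). rewrite H by lia. ring.
Qed.
Lemma Csum_S_l (n : nat) (f : nat -> Cx) :
  Csum (S n) f = f 0%nat + Csum n (fun k => f (S k)).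
Proof. induction n; simpl in *. ring. rewrite IHn. ring. Qed.
Lemma Csum_add_range (p q : nat) (f : nat -> Cx) :
  Csum (p + q) f = Csum p f + Csum q (fun k => f (p + k)%nat).
Proof.
  induction q; simpl.
  - rewrite Nat.add_0_r. ring.
  - rewrite Nat.add_succ_r. simpl. rewrite IHq. ring.
Qed.
Lemma Csum_rev (n : nat) (f : nat -> Cx) :
  Csum n f = Csum n (fun k => f (n - 1 - k)%nat).
Proof.
  induction n; [reflexivity|].
  rewrite (Csum_S_l n (fun k => f (S n - 1 - k)%nat)).
  replace (S n - 1 - 0)%nat with n by lia.
  rewrite (Csum_ext n (fun k => f (S n - 1 - S k)%nat) (fun k => f (n - 1 - k)%nat))
    by (intros; f_equal; lia).
  rewrite <- IHn. simpl. ring.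
Qed.
Lemma Csum_swap (n m : nat) (f : nat -> nat -> Cx) :
  Csum n (fun i => Csum m (fun j => f i j)) = Csum m (fun j => Csum n (fun i => f i j)).
Proof.
  induction n; simpl.
  - symmetry; apply Csum_zero; auto.
  - rewrite IHn, <- Csum_add. reflexivity.
Qed.
Lemma Csum_triangle_swap (n : nat) (f : nat -> nat -> Cx) :
  Csum n (fun j => Csum (S j) (fun m => f j m))
  = Csum n (fun m => Csum n (fun j => if (m <=? j)%nat then f j m else RtoC 0)).
Proof.
  rewrite <- Csum_swap. apply Csum_ext. intros j Hj.
  replace n with (S j + (n - S j))%nat by lia.
  rewrite Csum_add_range, (Csum_zero (n - S j)).
  - rewrite Cx_ring.(Radd_comm), Cx_ring.(Radd_0_l).
    apply Csum_ext. intros k Hk.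
    replace (k <=? j)%nat with true by (symmetry; apply Nat.leb_le; lia).
    reflexivity.
  - intros k Hk. replace (S j + k <=? j)%nat with false by (symmetry; apply Nat.leb_gt; lia).
    reflexivity.
Qed.
Lemma Csum_telescope (N : nat) (u : nat -> Cx) :
  Csum N (fun k => u (S k) - u k) = u N - u 0%nat.
Proof. induction N; simpl. ring. rewrite IHN. ring. Qed.

Lemma Cfall_succ (x : Cx) (j : nat) : Cfall (x + RtoC 1) (S j) = (x + RtoC 1) * Cfall x j.
Proof.
  induction j.
  - apply Cx_ext; simpl; ring.
  - change (Cfall (x + RtoC 1) (S (S j)))
      with (Cfall (x + RtoC 1) (S j) * (x + RtoC 1 - CofNat (S j))).
    rewrite IHj, CofNat_S. simpl. ring.
Qed.
Lemma Cfall_nat_lt (K m : nat) : (K < m)%nat -> Cfall (CofNat K) m = RtoC 0.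
Proof.
  intros H. induction m. lia.
  simpl. destruct (Nat.eq_dec K m) as [->|].
  - ring.
  - rewrite IHm by lia. ring.
Qed.
Lemma Cfall_nat_diag (K : nat) : Cfall (CofNat K) K = CofNat (fact K).
Proof.
  induction K. reflexivity.
  rewrite CofNat_S, Cfall_succ, IHK, CofNat_fact_S, CofNat_S. ring.
Qed.

Lemma Cbinom_0 (x : Cx) : Cbinom x 0 = RtoC 1.
Proof. apply Cx_ext; simpl; field. Qed.
Lemma Cbinom_pascal (x : Cx) (j : nat) :
  Cbinom (x + RtoC 1) (S j) = Cbinom x (S j) + Cbinom x j.
Proof.
  unfold Cbinom. rewrite Cfall_succ, CofNat_fact_S. simpl. rewrite CofNat_S.
  field. split; [apply CofNat_fact_neq0|]. rewrite <- CofNat_S. apply CofNat_S_neq0.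
Qed.
Lemma Cbinom_nat_lt (K m : nat) : (K < m)%nat -> Cbinom (CofNat K) m = RtoC 0.
Proof.
  intros H; unfold Cbinom; rewrite Cfall_nat_lt by auto. field. apply CofNat_fact_neq0.
Qed.
Lemma Cbinom_nat_diag (K : nat) : Cbinom (CofNat K) K = RtoC 1.
Proof. unfold Cbinom; rewrite Cfall_nat_diag. field. apply CofNat_fact_neq0. Qed.

Lemma Cbinom_vandermonde (K : nat) (x : Cx) (j : nat) :
  Csum (S j) (fun m => Cbinom x (j - m) * Cbinom (CofNat K) m) = Cbinom (x + CofNat K) j.
Proof.
  revert x j; induction K; intros x j.
  - rewrite Csum_S_l, Csum_zero.
    + rewrite Nat.sub_0_r, Cbinom_0, CofNat_0. replace (x + RtoC 0) with x by ring. ring.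
    + intros k Hk. rewrite Cbinom_nat_lt by lia. ring.
  - rewrite Csum_S_l, Nat.sub_0_r, Cbinom_0.
    rewrite (Csum_ext j _ (fun k => Cbinom x (j - S k) * Cbinom (CofNat K) (S k)
                          + Cbinom x (j - S k) * Cbinom (CofNat K) k))
      by (intros k Hk; rewrite CofNat_S, Cbinom_pascal; ring).
    rewrite Csum_add.
    assert (E1 : Cbinom x j * RtoC 1
                 + Csum j (fun k => Cbinom x (j - S k) * Cbinom (CofNat K) (S k))
                 = Cbinom (x + CofNat K) j).
    { rewrite <- IHK, (Csum_S_l j), Nat.sub_0_r, Cbinom_0. reflexivity. }
    destruct j as [|j].
    + simpl. rewrite !Cbinom_0. ring.
    + assert (E2 : Csum (S j) (fun k => Cbinom x (S j - S k) * Cbinom (CofNat K) k)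
                   = Cbinom (x + CofNat K) j).
      { rewrite <- IHK. apply Csum_ext. intros k Hk.
        replace (S j - S k)%nat with (j - k)%nat by lia. reflexivity. }
      rewrite E2.
      replace (x + CofNat (S K)) with ((x + CofNat K) + RtoC 1) by (rewrite CofNat_S; ring).
      rewrite Cbinom_pascal, <- E1. ring.
Qed.

Lemma Cpoch_add (a : Cx) (p q : nat) : Cpoch a (p + q) = Cpoch a p * Cpoch (a + CofNat p) q.
Proof.
  induction q; simpl.
  - rewrite Nat.add_0_r. ring.
  - rewrite Nat.add_succ_r. simpl. rewrite IHq, CofNat_add. ring.
Qed.
Lemma Cpoch_S_l (a : Cx) (q : nat) : Cpoch a (S q) = a * Cpoch (a + RtoC 1) q.
Proof.
  change (S q) with (1 + q)%nat. rewrite Cpoch_add.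
  replace (a + CofNat 1) with (a + RtoC 1) by (apply Cx_ext; simpl; ring).
  f_equal. apply Cx_ext; simpl; ring.
Qed.
Lemma Cpoch_1 (k : nat) : Cpoch (RtoC 1) k = CofNat (fact k).
Proof. induction k. reflexivity. simpl Cpoch. rewrite IHk, CofNat_fact_S, CofNat_S. ring. Qed.
Lemma Cpoch_2 (k : nat) : Cpoch (RtoC 2) k = CofNat (fact (S k)).
Proof.
  rewrite <- Cpoch_1, Cpoch_S_l.
  replace (RtoC 1 + RtoC 1) with (RtoC 2) by (apply Cx_ext; simpl; ring). ring.
Qed.
Lemma Cfall_Cpoch (z : Cx) (q : nat) : Cfall z q = Cpoch (z - CofNat q + RtoC 1) q.
Proof.
  induction q. reflexivity.
  simpl Cfall. rewrite IHq, Cpoch_S_l.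
  replace (z - CofNat (S q) + RtoC 1 + RtoC 1) with (z - CofNat q + RtoC 1)
    by (rewrite CofNat_S; ring).
  rewrite CofNat_S. ring.
Qed.
Lemma Cpoch_neq0 (a : Cx) (q : nat) :
  (forall i, (i < q)%nat -> a + CofNat i <> RtoC 0) -> Cpoch a q <> RtoC 0.
Proof.
  induction q; intros H; simpl; [apply RtoC_1_neq_0|].
  apply Cmul_neq0; [apply IHq; intros|]; apply H; lia.
Qed.

(** [poch_divdiff n x y] is the divided difference
    [((x)_(n+1) - (y)_(n+1)) / (x - y)], given by a formula valid also for [x = y]. *)
Definition poch_divdiff (n : nat) (x y : Cx) : Cx :=
  Csum (S n) (fun k => Cpoch x k * Cpoch (y + CofNat (S k)) (n - k)).

Lemma poch_divdiff_spec (n : nat) (x y : Cx) :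
  (x - y) * poch_divdiff n x y = Cpoch x (S n) - Cpoch y (S n).
Proof.
  unfold poch_divdiff. rewrite <- Csum_scal.
  set (u := fun k => Cpoch x k * Cpoch (y + CofNat k) (S n - k)).
  rewrite (Csum_ext (S n) _ (fun k => u (S k) - u k)).
  - rewrite Csum_telescope. unfold u. rewrite Nat.sub_diag, Nat.sub_0_r, CofNat_0.
    replace (y + RtoC 0) with y by ring. simpl. ring.
  - intros k Hk. unfold u. replace (S n - k)%nat with (S (n - k)) by lia.
    replace (S n - S k)%nat with (n - k)%nat by lia.
    rewrite (Cpoch_S_l (y + CofNat k)).
    replace (y + CofNat k + RtoC 1) with (y + CofNat (S k)) by (rewrite CofNat_S; ring).
    simpl. ring.
Qed.

Lemma poch_divdiff_sym (n : nat) (x y : Cx) : poch_divdiff n x y = poch_divdiff n y x.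
Proof.
  destruct (Cx_eq_dec x y) as [->|E]; [reflexivity|].
  assert (Hxy : x - y <> RtoC 0).
  { intro H. apply E. replace x with ((x - y) + y) by ring. rewrite H. ring. }
  assert (Hyx : y - x <> RtoC 0).
  { intro H. apply Hxy. replace (x - y) with (- (y - x)) by ring. rewrite H. ring. }
  replace (poch_divdiff n x y) with ((x - y) * poch_divdiff n x y / (x - y)) by (field; auto).
  replace (poch_divdiff n y x) with ((y - x) * poch_divdiff n y x / (y - x)) by (field; auto).
  rewrite !poch_divdiff_spec. field. auto.
Qed.

Lemma poch_divdiff_rev (n : nat) (x y : Cx) :
  Csum (S n) (fun j => Cpoch (x + CofNat (S n - j)) j * Cpoch y (n - j)) = poch_divdiff n x y.
Proof.
  rewrite poch_divdiff_sym. unfold poch_divdiff. rewrite (Csum_rev (S n)).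
  apply Csum_ext. intros k Hk.
  replace (S n - 1 - k)%nat with (n - k)%nat by lia.
  replace (S n - (n - k))%nat with (S k) by lia.
  replace (n - (n - k))%nat with k by lia. ring.
Qed.

Lemma poch_divdiff_diag (n : nat) (y : Cx) : (forall i, y + CofNat i <> RtoC 0) ->
  poch_divdiff n y y = Cpoch y (S n) * Csum (S n) (fun i => RtoC 1 / (y + CofNat i)).
Proof.
  intros Hy. unfold poch_divdiff. rewrite <- Csum_scal. apply Csum_ext. intros k Hk.
  replace (S n) with (k + S (n - k))%nat by lia.
  rewrite Cpoch_add, Cpoch_S_l.
  replace (y + CofNat k + RtoC 1) with (y + CofNat (S k)) by (rewrite CofNat_S; ring).
  field. auto.
Qed.

(** The coefficient of [(1/c)^m] in [sum_(j<N) sum_(i<=j) g j i c^(i-j)]. *)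
Definition diag_coef (N : nat) (g : nat -> nat -> Cx) (m : nat) : Cx :=
  Csum N (fun j => if (m <=? j)%nat then g j (j - m)%nat else RtoC 0).

Lemma Csum_if_mul_r (N m : nat) (h : nat -> Cx) (w : Cx) :
  Csum N (fun j => if (m <=? j)%nat then h j * w else RtoC 0)
  = Csum N (fun j => if (m <=? j)%nat then h j else RtoC 0) * w.
Proof.
  rewrite Cx_ring.(Rmul_comm), <- Csum_scal. apply Csum_ext. intros k Hk.
  destruct (m <=? k)%nat; ring.
Qed.

Lemma double_sum_as_poly (N : nat) (g : nat -> nat -> Cx) (c : Cx) : c <> RtoC 0 ->
  Csum N (fun j => Csum (S j) (fun i => g j i * (c ^ i / c ^ j)))
  = Csum N (fun m => diag_coef N g m * (RtoC 1 / c) ^ m).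
Proof.
  intros Hc.
  rewrite (Csum_ext N _ (fun j => Csum (S j) (fun m => g j (j - m)%nat * (RtoC 1 / c) ^ m))).
  - rewrite Csum_triangle_swap. apply Csum_ext. intros m Hm.
    unfold diag_coef. rewrite <- Csum_if_mul_r. reflexivity.
  - intros j Hj. rewrite Csum_rev. apply Csum_ext. intros i Hi.
    replace (S j - 1 - i)%nat with (j - i)%nat by lia.
    rewrite Cpow_div_le by (auto; lia). replace (j - (j - i))%nat with i by lia. reflexivity.
Qed.

Lemma diag_coef_moment (N : nat) (g : nat -> nat -> Cx) (K : nat) :
  Csum N (fun m => diag_coef N g m * Cbinom (CofNat K) m)
  = Csum N (fun j => Csum (S j) (fun m => g j (j - m)%nat * Cbinom (CofNat K) m)).
Proof.
  rewrite Csum_triangle_swap. apply Csum_ext. intros m Hm.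
  unfold diag_coef. rewrite <- Csum_if_mul_r. reflexivity.
Qed.

Lemma diag_coef_binom_moment (N : nat) (x f : nat -> Cx) (K : nat) :
  Csum N (fun m => diag_coef N (fun j i => Cbinom (x j) i * f j) m * Cbinom (CofNat K) m)
  = Csum N (fun j => Cbinom (x j + CofNat K) j * f j).
Proof.
  rewrite diag_coef_moment. apply Csum_ext. intros j Hj.
  rewrite <- Cbinom_vandermonde, Cx_ring.(Rmul_comm), <- Csum_scal.
  apply Csum_ext. intros; ring.
Qed.

(** The matrix [binom(K,m)], [K, m < N], is unitriangular. *)
Lemma binom_moments_inj (N : nat) (D : nat -> Cx) :
  (forall K, (K < N)%nat -> Csum N (fun m => D m * Cbinom (CofNat K) m) = RtoC 0) ->
  forall m, (m < N)%nat -> D m = RtoC 0.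
Proof.
  intros H m. induction m as [m IH] using lt_wf_ind. intros Hm.
  specialize (H m Hm).
  replace N with (m + (1 + (N - m - 1)))%nat in H by lia.
  rewrite !Csum_add_range in H.
  rewrite Csum_zero in H by (intros k Hk; rewrite IH by lia; ring).
  rewrite (Csum_zero (N - m - 1)) in H by (intros k Hk; rewrite Cbinom_nat_lt by lia; ring).
  simpl in H. rewrite Nat.add_0_r, Cbinom_nat_diag in H.
  replace (D m) with (RtoC 0 + (RtoC 0 + D m * RtoC 1 + RtoC 0)) by ring. exact H.
Qed.

(** * Part (i): the binomial moments of both double sums *)

Definition lhs_kernel (n : nat) (a b : Cx) (j i : nat) : Cx :=
  Cbinom (CofNat (S n) + a) i / Cbinom (CofNat n + b) j.
Definition rhs_kernel (a b : Cx) (k j : nat) : Cx :=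
  Cbinom (CofNat k + a) j / Cbinom (CofNat (S k) + b) k.

Definition lhs_moment (n : nat) (a b : Cx) (K : nat) : Cx :=
  Csum (S n) (fun j => Cbinom (CofNat (S n) + a + CofNat K) j / Cbinom (CofNat n + b) j).
Definition rhs_moment (n : nat) (a b : Cx) (K : nat) : Cx :=
  Csum (S n) (fun k => Cbinom (CofNat k + a + CofNat K) k / Cbinom (CofNat (S k) + b) k).

Lemma Sdouble_as_poly (n : nat) (a b c : Cx) : c <> RtoC 0 ->
  Sdouble n a b c = Csum (S n) (fun m => diag_coef (S n) (lhs_kernel n a b) m * (RtoC 1 / c) ^ m).
Proof. intros Hc. unfold Sdouble. rewrite <- double_sum_as_poly by auto. reflexivity. Qed.

Lemma lhs_kernel_moment (n : nat) (a b : Cx) (K : nat) :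
  Csum (S n) (fun m => diag_coef (S n) (lhs_kernel n a b) m * Cbinom (CofNat K) m)
  = lhs_moment n a b K.
Proof. exact (diag_coef_binom_moment (S n) _ _ K). Qed.

Lemma rhs_kernel_moment (n : nat) (a b : Cx) (K : nat) :
  Csum (S n) (fun m => diag_coef (S n) (rhs_kernel a b) m * Cbinom (CofNat K) m)
  = rhs_moment n a b K.
Proof. exact (diag_coef_binom_moment (S n) (fun k => CofNat k + a) _ K). Qed.

Section Moments.
Variables (n : nat) (a b : Cx).
Hypothesis Hb : forall k : nat, b <> - CofNat (S k).

Lemma b_shift_neq0 (i : nat) : b + RtoC 1 + CofNat i <> RtoC 0.
Proof.
  intro H. apply (Hb i).
  replace b with (b + RtoC 1 + CofNat i - CofNat (S i)) by (rewrite CofNat_S; ring).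
  rewrite H. ring.
Qed.
Lemma b1_neq0 : b + RtoC 1 <> RtoC 0.
Proof.
  replace (b + RtoC 1) with (b + RtoC 1 + CofNat 0) by (rewrite CofNat_0; ring).
  apply b_shift_neq0.
Qed.
Lemma nb_neq0 : CofNat (S n) + b <> RtoC 0.
Proof.
  replace (CofNat (S n) + b) with (b + RtoC 1 + CofNat n) by (rewrite CofNat_S; ring).
  apply b_shift_neq0.
Qed.
Lemma Cpoch_b_shift_neq0 (i q : nat) : Cpoch (b + RtoC 1 + CofNat i) q <> RtoC 0.
Proof.
  apply Cpoch_neq0. intros t Ht.
  replace (b + RtoC 1 + CofNat i + CofNat t) with (b + RtoC 1 + CofNat (i + t))
    by (rewrite CofNat_add; ring).
  apply b_shift_neq0.
Qed.
Lemma Cpoch_b1_neq0 (q : nat) : Cpoch (b + RtoC 1) q <> RtoC 0.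
Proof.
  replace (b + RtoC 1) with (b + RtoC 1 + CofNat 0) by (rewrite CofNat_0; ring).
  apply Cpoch_b_shift_neq0.
Qed.

Lemma lhs_moment_divdiff (K : nat) :
  lhs_moment n a b K * Cpoch (b + RtoC 1) (S n)
  = (CofNat (S n) + b) * poch_divdiff n (a + CofNat K + RtoC 1) (b + RtoC 1).
Proof.
  rewrite <- poch_divdiff_rev. unfold lhs_moment.
  rewrite Cx_ring.(Rmul_comm), <- !Csum_scal. apply Csum_ext.
  intros j Hj. unfold Cbinom. rewrite !Cfall_Cpoch.
  replace (CofNat (S n) + a + CofNat K - CofNat j + RtoC 1)
    with (a + CofNat K + RtoC 1 + CofNat (S n - j))
    by (rewrite CofNat_sub, CofNat_S by lia; ring).
  replace (CofNat n + b - CofNat j + RtoC 1) with (b + RtoC 1 + CofNat (n - j))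
    by (rewrite CofNat_sub by lia; ring).
  replace (S n) with ((n - j) + S j)%nat at 1 by lia.
  rewrite Cpoch_add. simpl (Cpoch (b + RtoC 1 + CofNat (n - j)) (S j)).
  replace (b + RtoC 1 + CofNat (n - j) + CofNat j) with (CofNat (S n) + b)
    by (rewrite CofNat_sub, CofNat_S by lia; ring).
  field. split; [apply CofNat_fact_neq0 | apply Cpoch_b_shift_neq0].
Qed.

Lemma rhs_moment_divdiff (K : nat) :
  rhs_moment n a b K * Cpoch (b + RtoC 1) (S n)
  = (b + RtoC 1) * poch_divdiff n (a + CofNat K + RtoC 1) (b + RtoC 1).
Proof.
  unfold rhs_moment, poch_divdiff.
  rewrite Cx_ring.(Rmul_comm), <- !Csum_scal. apply Csum_ext.
  intros k Hk. unfold Cbinom. rewrite !Cfall_Cpoch.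
  replace (CofNat k + a + CofNat K - CofNat k + RtoC 1) with (a + CofNat K + RtoC 1) by ring.
  replace (CofNat (S k) + b - CofNat k + RtoC 1) with (b + RtoC 1 + RtoC 1)
    by (rewrite CofNat_S; ring).
  replace (S n) with (S k + (n - k))%nat at 1 by lia.
  rewrite Cpoch_add, Cpoch_S_l.
  replace (b + RtoC 1 + RtoC 1) with (b + RtoC 1 + CofNat 1) by (apply Cx_ext; simpl; ring).
  field. split; [apply CofNat_fact_neq0 | apply Cpoch_b_shift_neq0].
Qed.

Lemma moments_agree (K : nat) :
  lhs_moment n a b K / (CofNat (S n) + b) = rhs_moment n a b K / (b + RtoC 1).
Proof.
  assert (Hp := Cpoch_b1_neq0 (S n)). assert (Hn := nb_neq0). assert (Hy := b1_neq0).
  replace (lhs_moment n a b K / (CofNat (S n) + b)) with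
    (lhs_moment n a b K * Cpoch (b + RtoC 1) (S n)
     / (Cpoch (b + RtoC 1) (S n) * (CofNat (S n) + b)))
    by (field; auto).
  replace (rhs_moment n a b K / (b + RtoC 1)) with
    (rhs_moment n a b K * Cpoch (b + RtoC 1) (S n) / (Cpoch (b + RtoC 1) (S n) * (b + RtoC 1)))
    by (field; auto).
  rewrite lhs_moment_divdiff, rhs_moment_divdiff. field. auto.
Qed.

Lemma diag_coef_agree (m : nat) : (m < S n)%nat ->
  diag_coef (S n) (lhs_kernel n a b) m / (CofNat (S n) + b)
  = diag_coef (S n) (rhs_kernel a b) m / (b + RtoC 1).
Proof.
  assert (Hn := nb_neq0). assert (Hy := b1_neq0).
  set (D := fun m => diag_coef (S n) (lhs_kernel n a b) m / (CofNat (S n) + b)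
                     - diag_coef (S n) (rhs_kernel a b) m / (b + RtoC 1)).
  enough (HD : forall m, (m < S n)%nat -> D m = RtoC 0).
  { intros Hm. specialize (HD m Hm). unfold D in HD.
    match goal with |- ?l = ?r => replace l with (l - r + r) by ring end.
    rewrite HD. ring. }
  apply binom_moments_inj. intros K HK. unfold D.
  rewrite (Csum_ext _ _ (fun m =>
      RtoC 1 / (CofNat (S n) + b) * (diag_coef (S n) (lhs_kernel n a b) m * Cbinom (CofNat K) m)
    - RtoC 1 / (b + RtoC 1) * (diag_coef (S n) (rhs_kernel a b) m * Cbinom (CofNat K) m)))
    by (intros; field; auto).
  rewrite Csum_sub, !Csum_scal, lhs_kernel_moment, rhs_kernel_moment.
  replace (RtoC 1 / (CofNat (S n) + b) * lhs_moment n a b K)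
    with (lhs_moment n a b K / (CofNat (S n) + b)) by (field; auto).
  rewrite moments_agree. field. auto.
Qed.

End Moments.

Lemma Sdouble_dual (n : nat) (a b c : Cx) (Hb : forall k : nat, b <> - CofNat (S k)) :
  c <> RtoC 0 ->
  Sdouble n a b c / (CofNat (S n) + b)
  = Csum (S n) (fun k => Csum (S k) (fun j =>
      (Cbinom (CofNat k + a) j / Cbinom (CofNat (S k) + b) k) * (c ^ j / c ^ k)))
    / (b + RtoC 1).
Proof.
  intros Hc.
  assert (Hn := nb_neq0 n b Hb). assert (Hy := b1_neq0 b Hb).
  rewrite Sdouble_as_poly by auto.
  change (fun k => Csum (S k) (fun j =>
            (Cbinom (CofNat k + a) j / Cbinom (CofNat (S k) + b) k) * (c ^ j / c ^ k)))
    with (fun k => Csum (S k) (fun j => rhs_kernel a b k j * (c ^ j / c ^ k))).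
  rewrite double_sum_as_poly by auto.
  unfold Cdiv at 1 3. rewrite !(Cx_ring.(Rmul_comm) _ (Cinv _)), <- !Csum_scal.
  apply Csum_ext. intros m Hm.
  assert (E := diag_coef_agree n a b Hb m Hm). unfold Cdiv in E.
  rewrite Cx_ring.(Rmul_assoc), (Cx_ring.(Rmul_comm) (Cinv _)), E, Cx_ring.(Rmul_assoc).
  f_equal. ring.
Qed.

Definition Ccv (s : nat -> Cx) (l : Cx) : Prop :=
  Un_cv (fun N => Re (s N)) (Re l) /\ Un_cv (fun N => Im (s N)) (Im l).

Lemma Un_cv_ext (s t : nat -> R) (l : R) : (forall N, s N = t N) -> Un_cv s l -> Un_cv t l.
Proof.
  intros E H eps He. destruct (H eps He) as [N HN]. exists N. intros k Hk. rewrite <- E. auto.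
Qed.

Lemma Un_cv_const (c : R) : Un_cv (fun _ => c) c.
Proof. intros eps He. exists 0%nat. intros. unfold Rdist. rewrite Rminus_diag, Rabs_R0. auto. Qed.

Lemma Un_cv_shift (s : nat -> R) (l : R) (p : nat) :
  Un_cv s l <-> Un_cv (fun N => s (N + p)%nat) l.
Proof. split; [apply CV_shift' | apply CV_shift]. Qed.

Lemma Ccv_ext (s t : nat -> Cx) (l : Cx) : (forall N, s N = t N) -> Ccv s l -> Ccv t l.
Proof. intros E [H1 H2]. split; eapply Un_cv_ext; eauto; intros; simpl; rewrite E; reflexivity. Qed.

Lemma Ccv_shift (s : nat -> Cx) (l : Cx) (p : nat) : Ccv s l <-> Ccv (fun N => s (N + p)%nat) l.
Proof.
  unfold Ccv. rewrite (Un_cv_shift (fun N => Re (s N)) _ p), (Un_cv_shift (fun N => Im (s N)) _ p).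
  tauto.
Qed.

Lemma Ccv_const (c : Cx) : Ccv (fun _ => c) c.
Proof. split; apply Un_cv_const. Qed.

Lemma Ccv_add (s t : nat -> Cx) (l1 l2 : Cx) :
  Ccv s l1 -> Ccv t l2 -> Ccv (fun N => s N + t N) (l1 + l2).
Proof. intros [A1 A2] [B1 B2]; split; simpl; apply CV_plus; auto. Qed.

Lemma Ccv_sub (s t : nat -> Cx) (l1 l2 : Cx) :
  Ccv s l1 -> Ccv t l2 -> Ccv (fun N => s N - t N) (l1 - l2).
Proof. intros [A1 A2] [B1 B2]; split; simpl; apply CV_plus; auto; apply CV_opp; auto. Qed.

Lemma Ccv_mul (s t : nat -> Cx) (l1 l2 : Cx) :
  Ccv s l1 -> Ccv t l2 -> Ccv (fun N => s N * t N) (l1 * l2).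
Proof.
  intros [A1 A2] [B1 B2]; split; simpl.
  - apply CV_minus; apply CV_mult; auto.
  - apply CV_plus; apply CV_mult; auto.
Qed.

Lemma Ccv_unique (s : nat -> Cx) (l1 l2 : Cx) : Ccv s l1 -> Ccv s l2 -> l1 = l2.
Proof. intros [A1 A2] [B1 B2]. apply Cx_ext; eapply UL_sequence; eauto. Qed.

Lemma Cseries_value_eq (u : nat -> Cx) (l : Cx) : Cseries_cv u l -> Cseries_value u = l.
Proof.
  intros H. unfold Cseries_value.
  assert (E : exists l, Cseries_cv u l) by eauto.
  apply Ccv_unique with (fun N => Csum N u); [|exact H].
  exact (epsilon_spec (inhabits (RtoC 0)) (fun l => Cseries_cv u l) E).
Qed.

Lemma Cseries_cv_ext (u v : nat -> Cx) (l : Cx) :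
  (forall k, u k = v k) -> Cseries_cv u l -> Cseries_cv v l.
Proof. intros E H. eapply Ccv_ext; [|exact H]. intros N. apply Csum_ext. intros; apply E. Qed.

Lemma Cseries_cv_add (u v : nat -> Cx) (l1 l2 : Cx) : Cseries_cv u l1 -> Cseries_cv v l2 ->
  Cseries_cv (fun k => u k + v k) (l1 + l2).
Proof.
  intros H1 H2. eapply Ccv_ext; [intros N; symmetry; apply Csum_add|]. apply Ccv_add; auto.
Qed.
Lemma Cseries_cv_sub (u v : nat -> Cx) (l1 l2 : Cx) : Cseries_cv u l1 -> Cseries_cv v l2 ->
  Cseries_cv (fun k => u k - v k) (l1 - l2).
Proof.
  intros H1 H2. eapply Ccv_ext; [intros N; symmetry; apply Csum_sub|]. apply Ccv_sub; auto.
Qed.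
Lemma Cseries_cv_scal (c : Cx) (u : nat -> Cx) (l : Cx) : Cseries_cv u l ->
  Cseries_cv (fun k => c * u k) (c * l).
Proof.
  intros H. eapply Ccv_ext; [intros N; symmetry; apply Csum_scal|].
  apply Ccv_mul; auto. apply Ccv_const.
Qed.
Lemma Cseries_cv_Csum (M : nat) (u : nat -> nat -> Cx) (l : nat -> Cx) :
  (forall m, (m < M)%nat -> Cseries_cv (u m) (l m)) ->
  Cseries_cv (fun k => Csum M (fun m => u m k)) (Csum M l).
Proof.
  induction M; intros H; simpl.
  - eapply Ccv_ext; [|apply Ccv_const]. intros N. symmetry. apply Csum_zero. auto.
  - apply Cseries_cv_add; [apply IHM; intros|]; apply H; lia.
Qed.
Lemma Cseries_cv_shift (u : nat -> Cx) (l : Cx) (p : nat) :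
  Cseries_cv u l -> Cseries_cv (fun k => u (p + k)%nat) (l - Csum p u).
Proof.
  intros H. apply (Ccv_shift _ _ p) in H.
  eapply Ccv_ext; [|apply Ccv_sub; [exact H | apply Ccv_const]].
  intros N. simpl. rewrite Nat.add_comm, Csum_add_range. ring.
Qed.

Lemma Rabs_Re_le_Cnorm (z : Cx) : (Rabs (Re z) <= Cnorm z)%R.
Proof.
  unfold Cnorm. rewrite <- sqrt_Rsqr_abs. apply sqrt_le_1; unfold Rsqr; nra.
Qed.
Lemma Rabs_Im_le_Cnorm (z : Cx) : (Rabs (Im z) <= Cnorm z)%R.
Proof.
  unfold Cnorm. rewrite <- sqrt_Rsqr_abs. apply sqrt_le_1; unfold Rsqr; nra.
Qed.
Lemma Re_le_Cnorm (v : Cx) : (Re v <= Cnorm v)%R.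
Proof. pose proof (Rabs_Re_le_Cnorm v). pose proof (Rle_abs (Re v)). lra. Qed.
Lemma Cnorm_ge0 (z : Cx) : (0 <= Cnorm z)%R.
Proof. apply sqrt_pos. Qed.
Lemma Cnorm_mul (z w : Cx) : Cnorm (z * w) = (Cnorm z * Cnorm w)%R.
Proof. unfold Cnorm. rewrite <- sqrt_mult by nra. f_equal. simpl. ring. Qed.
Lemma Cnorm_pow (z : Cx) (k : nat) : Cnorm (z ^ k) = (Cnorm z ^ k)%R.
Proof.
  induction k; simpl.
  - unfold Cnorm; simpl. replace (1 * 1 + 0 * 0)%R with 1%R by ring. apply sqrt_1.
  - rewrite Cnorm_mul, IHk. ring.
Qed.
Lemma Cnorm_RtoC (x : R) : Cnorm (RtoC x) = Rabs x.
Proof. unfold Cnorm; simpl. rewrite <- sqrt_Rsqr_abs. f_equal. unfold Rsqr. ring. Qed.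
Lemma Cnorm_inv (w : Cx) : w <> RtoC 0 -> Cnorm (Cinv w) = (/ Cnorm w)%R.
Proof.
  intros Hw. assert (E : (Cnorm w * Cnorm (Cinv w))%R = 1%R).
  { rewrite <- Cnorm_mul. replace (w * Cinv w) with (RtoC 1) by (field; auto).
    rewrite Cnorm_RtoC. apply Rabs_R1. }
  assert (Cnorm w <> 0%R) by (intro H; rewrite H in E; lra).
  apply Rmult_eq_reg_l with (Cnorm w); auto. rewrite E. field; auto.
Qed.
Lemma Cnorm_pos (w : Cx) : w <> RtoC 0 -> (0 < Cnorm w)%R.
Proof.
  intros Hw. destruct (Cnorm_ge0 w) as [H|H]; auto. exfalso.
  assert (E := Cnorm_inv w Hw). rewrite <- H, Rinv_0 in E.
  assert (E2 : Cnorm (w * Cinv w) = 0%R) by (rewrite Cnorm_mul, E; ring).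
  replace (w * Cinv w) with (RtoC 1) in E2 by (field; auto).
  rewrite Cnorm_RtoC, Rabs_R1 in E2. lra.
Qed.
Lemma Cnorm_lt1_sub_neq0 (z : Cx) : (Cnorm z < 1)%R -> RtoC 1 - z <> RtoC 0.
Proof.
  intros Hz H. assert (z = RtoC 1) as -> by (replace z with (RtoC 1 - (RtoC 1 - z)) by ring;
                                             rewrite H; ring).
  rewrite Cnorm_RtoC, Rabs_R1 in Hz. lra.
Qed.

Lemma Ccv_norm0 (s : nat -> Cx) : Un_cv (fun N => Cnorm (s N)) 0%R -> Ccv s (RtoC 0).
Proof.
  intros H. split; intros eps He; destruct (H eps He) as [N HN]; exists N; intros k Hk;
  specialize (HN k Hk); unfold Rdist in *; simpl; rewrite Rminus_0_r in *;
  rewrite Rabs_pos_eq in HN by apply Cnorm_ge0; eapply Rle_lt_trans; eauto.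
  - apply Rabs_Re_le_Cnorm.
  - apply Rabs_Im_le_Cnorm.
Qed.

Lemma Ccv_pow0 (z : Cx) : (Cnorm z < 1)%R -> Ccv (fun N => z ^ N) (RtoC 0).
Proof.
  intros Hz. apply Ccv_norm0. eapply Un_cv_ext; [intros N; symmetry; apply Cnorm_pow|].
  intros eps He. destruct (pow_lt_1_zero (Cnorm z)) with eps as [N HN]; auto.
  - rewrite Rabs_pos_eq; [lra | apply Cnorm_ge0].
  - exists N. intros k Hk. unfold Rdist. rewrite Rminus_0_r. auto.
Qed.

Lemma Ccv_inv_shift0 (w : Cx) : Ccv (fun N => Cinv (CofNat N + w)) (RtoC 0).
Proof.
  apply Ccv_norm0. intros eps He.
  destruct (INR_unbounded (1 + / eps - Re w)) as [N1 HN1].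
  exists N1. intros k Hk. unfold Rdist. rewrite Rminus_0_r, Rabs_pos_eq by apply Cnorm_ge0.
  apply le_INR in Hk.
  assert (Hpos : (0 < / eps)%R) by (apply Rinv_0_lt_compat; lra).
  assert (Hn : (1 + / eps <= Cnorm (CofNat k + w))%R)
    by (pose proof (Re_le_Cnorm (CofNat k + w)); simpl in *; lra).
  assert (Hnz : CofNat k + w <> RtoC 0).
  { intro E. rewrite E, Cnorm_RtoC, Rabs_R0 in Hn. lra. }
  rewrite Cnorm_inv by auto.
  replace eps with (/ / eps)%R by (field; lra).
  apply Rinv_lt_contravar; [apply Rmult_lt_0_compat|]; lra.
Qed.

Lemma Cseries_cv_comparison (u : nat -> Cx) (v : nat -> R) (K0 : nat) :
  (forall k, (K0 <= k)%nat -> (Cnorm (u k) <= v k)%R) -> ex_series v ->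
  exists l, Cseries_cv u l.
Proof.
  intros Hb Hv.
  assert (Hv' : ex_series (fun k => v (K0 + k)%nat)) by (apply ex_series_incr_n; exact Hv).
  assert (Hpart : forall proj : Cx -> R, (forall w, Rabs (proj w) <= Cnorm w)%R ->
            (forall w w', proj (w + w') = (proj w + proj w')%R) -> proj (RtoC 0) = 0%R ->
            exists l, Un_cv (fun N => proj (Csum N (fun k => u (K0 + k)%nat))) l).
  { intros proj Hproj Hadd H0.
    assert (Hs : ex_series (fun k => proj (u (K0 + k)%nat))).
    { apply (@ex_series_le R_AbsRing R_CompleteNormedModule) with (fun k => v (K0 + k)%nat); auto.
      intros k. eapply Rle_trans; [apply Hproj | apply Hb; lia]. }
    apply Series_correct, is_series_Reals in Hs.
    exists (Series (fun k => proj (u (K0 + k)%nat))). apply (Un_cv_shift _ _ 1).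
    eapply Un_cv_ext; [|exact Hs]. intros N. rewrite Nat.add_1_r.
    induction N; simpl in *; rewrite Hadd; [rewrite H0; ring|]. rewrite IHN. reflexivity. }
  destruct (Hpart Re Rabs_Re_le_Cnorm (fun _ _ => eq_refl) eq_refl) as [l1 H1].
  destruct (Hpart Im Rabs_Im_le_Cnorm (fun _ _ => eq_refl) eq_refl) as [l2 H2].
  exists (mkC l1 l2 + Csum K0 u).
  assert (HS : Cseries_cv (fun k => u (K0 + k)%nat) (mkC l1 l2)) by (split; auto).
  apply (Ccv_shift _ _ K0). eapply Ccv_ext; [|apply Ccv_add; [exact HS | apply Ccv_const]].
  intros N. simpl. rewrite Nat.add_comm, Csum_add_range. ring.
Qed.

Definition binom_psum (z : Cx) (m N : nat) : Cx :=
  Csum N (fun K => Cbinom (CofNat K) m * z ^ K).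

Lemma binom_psum_0 (z : Cx) (N : nat) : (RtoC 1 - z) * binom_psum z 0 N = RtoC 1 - z ^ N.
Proof.
  induction N; unfold binom_psum in *; simpl; [ring|].
  rewrite Cbinom_0. transitivity ((RtoC 1 - z) * Csum N (fun K => Cbinom (CofNat K) 0 * z ^ K)
                                  + (RtoC 1 - z) * z ^ N); [ring|].
  rewrite IHN. ring.
Qed.

Lemma binom_psum_S (z : Cx) (m N : nat) :
  (RtoC 1 - z) * binom_psum z (S m) (S N)
  = z * binom_psum z m N - Cbinom (CofNat N) (S m) * z ^ (S N).
Proof.
  induction N; unfold binom_psum in *.
  - simpl. rewrite Cbinom_nat_lt by lia. ring.
  - change (Csum (S (S N)) ?f) with (Csum (S N) f + f (S N)).
    change (Csum (S N) (fun K => Cbinom (CofNat K) m * z ^ K))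
      with (Csum N (fun K => Cbinom (CofNat K) m * z ^ K) + Cbinom (CofNat N) m * z ^ N).
    rewrite Cx_ring.(Rmul_comm), Cx_ring.(Rdistr_l), (Cx_ring.(Rmul_comm) _ (RtoC 1 - z)), IHN.
    rewrite CofNat_S, Cbinom_pascal. simpl. ring.
Qed.

Lemma Cbinom_nat_real (K m : nat) :
  exists f, (0 <= f)%R /\ Cbinom (CofNat K) m = RtoC f.
Proof.
  assert (Hfall : exists f, (0 <= f)%R /\ Cfall (CofNat K) m = RtoC f).
  { induction m.
    - exists 1%R; split; [lra|reflexivity].
    - destruct IHm as [f [Hf E]]. destruct (le_lt_dec m K) as [Hm|Hm].
      + exists (f * (INR K - INR m))%R. split.
        * apply le_INR in Hm. nra.
        * simpl. rewrite E. unfold CofNat. rewrite RtoC_mul, RtoC_sub. reflexivity.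
      + exists 0%R. split; [lra|]. apply Cfall_nat_lt. lia. }
  destruct Hfall as [f [Hf E]].
  exists (f / INR (fact m))%R. split.
  - apply Rdiv_le_0_compat; [auto | apply INR_fact_lt_0].
  - unfold Cbinom, Cdiv. rewrite E. unfold CofNat.
    rewrite Cinv_RtoC, <- RtoC_mul by apply INR_fact_neq_0. reflexivity.
Qed.

Definition rbinom (K m : nat) : R := Re (Cbinom (CofNat K) m).

Lemma rbinom_spec (K m : nat) : (0 <= rbinom K m)%R /\ Cbinom (CofNat K) m = RtoC (rbinom K m).
Proof. unfold rbinom. destruct (Cbinom_nat_real K m) as [f [Hf ->]]. auto. Qed.

Definition rbinom_psum (r : R) (m N : nat) : R := Re (binom_psum (RtoC r) m N).

Lemma binom_psum_RtoC (r : R) (m N : nat) : binom_psum (RtoC r) m N = RtoC (rbinom_psum r m N).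
Proof.
  unfold rbinom_psum. apply Cx_ext; [reflexivity|]. simpl Im at 2.
  unfold binom_psum. induction N; [reflexivity|]. simpl Csum.
  destruct (rbinom_spec N m) as [_ ->]. rewrite Cpow_RtoC. simpl. rewrite IHN. ring.
Qed.

Lemma rbinom_psum_S (r : R) (m N : nat) :
  rbinom_psum r m (S N) = (rbinom_psum r m N + rbinom N m * r ^ N)%R.
Proof.
  unfold rbinom_psum, binom_psum. simpl Csum.
  destruct (rbinom_spec N m) as [_ ->]. rewrite Cpow_RtoC. simpl. ring.
Qed.

Lemma rbinom_psum_growing (r : R) (m : nat) : (0 <= r)%R -> Un_growing (rbinom_psum r m).
Proof.
  intros Hr N. rewrite rbinom_psum_S. pose proof (proj1 (rbinom_spec N m)).
  pose proof (pow_le r N Hr). nra.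
Qed.

(** Monotone, and bounded by induction on [m] through the recursions
    [binom_psum_0] and [binom_psum_S]. *)
Lemma rbinom_psum_cv (r : R) (m : nat) : (0 <= r < 1)%R -> { l | Un_cv (rbinom_psum r m) l }.
Proof.
  intros Hr. assert (Hg := rbinom_psum_growing r m (proj1 Hr)).
  induction m.
  - apply growing_cv; auto. exists (/ (1 - r))%R. intros x [N ->].
    assert (E := binom_psum_0 (RtoC r) N).
    rewrite binom_psum_RtoC, Cpow_RtoC, <- RtoC_sub, <- RtoC_mul, <- RtoC_sub in E.
    apply RtoC_inj in E. pose proof (pow_le r N (proj1 Hr)).
    apply Rmult_le_reg_l with (1 - r)%R; [lra|]. rewrite Rinv_r; lra.
  - destruct (IHm (rbinom_psum_growing r m (proj1 Hr))) as [l Hl].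
    assert (Hle : forall N, (rbinom_psum r m N <= l)%R)
      by (intros; apply growing_ineq; auto; apply rbinom_psum_growing; lra).
    assert (Hl0 : (0 <= l)%R).
    { apply Rle_trans with (rbinom_psum r m 0); [|apply Hle].
      unfold rbinom_psum, binom_psum; simpl; lra. }
    apply growing_cv; auto. exists (r * l / (1 - r))%R. intros x [N ->].
    destruct N.
    { unfold rbinom_psum, binom_psum; simpl.
      apply Rdiv_le_0_compat; nra. }
    assert (E := binom_psum_S (RtoC r) m N).
    rewrite !binom_psum_RtoC, Cpow_RtoC in E.
    destruct (rbinom_spec N (S m)) as [Hrb Erb]. rewrite Erb in E.
    rewrite <- RtoC_sub, <- !RtoC_mul, <- RtoC_sub in E. apply RtoC_inj in E.
    pose proof (pow_le r (S N) (proj1 Hr)). pose proof (Hle N).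
    apply Rmult_le_reg_l with (1 - r)%R; [lra|].
    replace ((1 - r) * (r * l / (1 - r)))%R with (r * l)%R by (field; lra).
    rewrite E. assert (0 <= rbinom N (S m) * r ^ S N)%R by (apply Rmult_le_pos; auto).
    nra.
Qed.

Lemma rbinom_term_cv0 (r : R) (m : nat) : (0 <= r < 1)%R ->
  Un_cv (fun N => rbinom N m * r ^ N)%R 0%R.
Proof.
  intros Hr. destruct (rbinom_psum_cv r m Hr) as [l Hl].
  apply Un_cv_ext with (fun N => rbinom_psum r m (N + 1) - rbinom_psum r m N)%R.
  - intros N. rewrite Nat.add_1_r, rbinom_psum_S. ring.
  - replace 0%R with (l - l)%R by ring. apply CV_minus; auto. apply Un_cv_shift, Hl.
Qed.

Lemma binom_series (z : Cx) (m : nat) : (Cnorm z < 1)%R ->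
  Cseries_cv (fun K => Cbinom (CofNat K) m * z ^ K) (z ^ m / (RtoC 1 - z) ^ (S m)).
Proof.
  intros Hz. assert (H1 := Cnorm_lt1_sub_neq0 z Hz).
  change (Ccv (binom_psum z m) (z ^ m / (RtoC 1 - z) ^ S m)).
  induction m.
  - eapply Ccv_ext.
    { intros N. symmetry. transitivity ((RtoC 1 - z) * binom_psum z 0 N / (RtoC 1 - z)).
      - field; auto.
      - rewrite binom_psum_0. reflexivity. }
    replace (z ^ 0 / (RtoC 1 - z) ^ 1) with ((RtoC 1 - RtoC 0) * Cinv (RtoC 1 - z))
      by (simpl; field; auto).
    apply Ccv_mul; [apply Ccv_sub; [apply Ccv_const | apply Ccv_pow0; auto] | apply Ccv_const].
  - apply (Ccv_shift _ _ 1). eapply Ccv_ext.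
    { intros N. rewrite Nat.add_1_r. symmetry.
      transitivity ((RtoC 1 - z) * binom_psum z (S m) (S N) / (RtoC 1 - z)).
      - field; auto.
      - rewrite binom_psum_S. reflexivity. }
    replace (z ^ S m / (RtoC 1 - z) ^ S (S m))
      with ((z * (z ^ m / (RtoC 1 - z) ^ S m) - RtoC 0) * Cinv (RtoC 1 - z))
      by (simpl; field; split; auto; apply Cpow_neq0; auto).
    apply Ccv_mul; [|apply Ccv_const]. apply Ccv_sub.
    + apply Ccv_mul; auto. apply Ccv_const.
    + apply Ccv_norm0.
      apply Un_cv_ext with (fun N => Cnorm z * (rbinom N (S m) * Cnorm z ^ N))%R.
      { intros N. rewrite Cnorm_mul, Cnorm_pow. destruct (rbinom_spec N (S m)) as [Hrb ->].
        rewrite Cnorm_RtoC, Rabs_pos_eq by auto. simpl. ring. }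
      replace 0%R with (Cnorm z * 0)%R by ring. apply CV_mult; [apply Un_cv_const|].
      apply rbinom_term_cv0. split; [apply Cnorm_ge0 | auto].
Qed.

Section InvShift.
Variable c : Cx.
Hypothesis Hc : (1 < Cnorm (c + RtoC 1))%R.

Lemma c1_neq0 : c + RtoC 1 <> RtoC 0.
Proof. intro H. rewrite H, Cnorm_RtoC, Rabs_R0 in Hc. lra. Qed.
Lemma c_neq0 : c <> RtoC 0.
Proof.
  intro H. rewrite H in Hc. replace (RtoC 0 + RtoC 1) with (RtoC 1) in Hc by ring.
  rewrite Cnorm_RtoC, Rabs_R1 in Hc. lra.
Qed.
Lemma inv_c1_norm_lt1 : (Cnorm (RtoC 1 / (c + RtoC 1)) < 1)%R.
Proof.
  unfold Cdiv. rewrite Cnorm_mul, Cnorm_RtoC, Rabs_R1, Rmult_1_l, Cnorm_inv by apply c1_neq0.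
  apply Rmult_lt_reg_l with (Cnorm (c + RtoC 1)); [lra|]. rewrite Rinv_r; lra.
Qed.
Lemma binom_series_value_inv_c1 (m : nat) :
  (RtoC 1 / (c + RtoC 1)) ^ m / (RtoC 1 - RtoC 1 / (c + RtoC 1)) ^ S m
  = (c + RtoC 1) / c * (RtoC 1 / c) ^ m.
Proof.
  assert (H1 := c1_neq0). assert (H0 := c_neq0).
  replace (RtoC 1 - RtoC 1 / (c + RtoC 1)) with (c / (c + RtoC 1)) by (field; auto).
  rewrite !Cpow_div by auto. simpl (_ ^ S m).
  assert (c ^ m <> RtoC 0) by (apply Cpow_neq0; auto).
  assert ((c + RtoC 1) ^ m <> RtoC 0) by (apply Cpow_neq0; auto).
  rewrite Cpow_1_l. field. auto.
Qed.
End InvShift.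

Lemma lhs_moment_series (n : nat) (a b c : Cx) : (1 < Cnorm (c + RtoC 1))%R ->
  Cseries_cv (fun K => lhs_moment n a b K * (RtoC 1 / (c + RtoC 1)) ^ K)
             ((c + RtoC 1) / c * Sdouble n a b c).
Proof.
  intros Hc. set (z := RtoC 1 / (c + RtoC 1)).
  rewrite Sdouble_as_poly, <- Csum_scal by (apply c_neq0; auto).
  apply Cseries_cv_ext with
    (fun K => Csum (S n) (fun m =>
       diag_coef (S n) (lhs_kernel n a b) m * (Cbinom (CofNat K) m * z ^ K))).
  { intros K. rewrite <- lhs_kernel_moment, Cx_ring.(Rmul_comm), <- Csum_scal.
    apply Csum_ext. intros; ring. }
  rewrite (Csum_ext _ _ (fun m =>
             diag_coef (S n) (lhs_kernel n a b) m * (z ^ m / (RtoC 1 - z) ^ S m)))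
    by (intros m Hm; unfold z; rewrite binom_series_value_inv_c1 by auto; ring).
  apply Cseries_cv_Csum. intros m Hm. apply Cseries_cv_scal, binom_series, inv_c1_norm_lt1, Hc.
Qed.

(** The [K]-th coefficient of [((c+1)/c) Sdouble n a b c / (n+b+1)] as a power series
    in [1/(c+1)]. *)
Definition gen_coef (n : nat) (a b : Cx) (K : nat) : Cx :=
  poch_divdiff n (a + CofNat K + RtoC 1) (b + RtoC 1) / Cpoch (b + RtoC 1) (S n).

Lemma gen_coef_spec (n : nat) (a b : Cx) (K : nat) : Cpoch (b + RtoC 1) (S n) <> RtoC 0 ->
  (a - b + CofNat K) * gen_coef n a b K
  = Cpoch (a + CofNat K + RtoC 1) (S n) / Cpoch (b + RtoC 1) (S n) - RtoC 1.
Proof.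
  intros Hp. unfold gen_coef.
  replace (a - b + CofNat K) with (a + CofNat K + RtoC 1 - (b + RtoC 1)) by ring.
  transitivity ((a + CofNat K + RtoC 1 - (b + RtoC 1))
                * poch_divdiff n (a + CofNat K + RtoC 1) (b + RtoC 1) / Cpoch (b + RtoC 1) (S n)).
  - field. auto.
  - rewrite poch_divdiff_spec. field. auto.
Qed.

Lemma Sdouble_generating (n : nat) (a b c : Cx) (Hb : forall k : nat, b <> - CofNat (S k)) :
  (1 < Cnorm (c + RtoC 1))%R ->
  Cseries_cv (fun K => gen_coef n a b K * (RtoC 1 / (c + RtoC 1)) ^ K)
             ((c + RtoC 1) / c * Sdouble n a b c / (CofNat (S n) + b)).
Proof.
  intros Hc. assert (HN := nb_neq0 n b Hb). assert (HP := Cpoch_b1_neq0 b Hb (S n)).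
  replace ((c + RtoC 1) / c * Sdouble n a b c / (CofNat (S n) + b))
    with (RtoC 1 / (CofNat (S n) + b) * ((c + RtoC 1) / c * Sdouble n a b c))
    by (field; split; [apply c_neq0|]; auto).
  eapply Cseries_cv_ext; [|apply Cseries_cv_scal, lhs_moment_series, Hc].
  intros K. cbv beta. unfold gen_coef.
  replace (lhs_moment n a b K)
    with (lhs_moment n a b K * Cpoch (b + RtoC 1) (S n) / Cpoch (b + RtoC 1) (S n))
    by (field; auto).
  rewrite lhs_moment_divdiff by auto. field. auto.
Qed.

(** * Part (ii): the hypergeometric form *)

Definition F21_term (a b c z : Cx) (k : nat) : Cx :=
  Cpoch a k * Cpoch b k * z ^ k / (Cpoch c k * CofNat (fact k)).
Definition F32_term (a b c d e z : Cx) (k : nat) : Cx :=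
  Cpoch a k * Cpoch b k * Cpoch c k * z ^ k / (Cpoch d k * Cpoch e k * CofNat (fact k)).

Lemma F21_eq (a b c z l : Cx) : Cseries_cv (F21_term a b c z) l -> F21 a b c z = l.
Proof. apply Cseries_value_eq. Qed.
Lemma F32_eq (a b c d e z l : Cx) : Cseries_cv (F32_term a b c d e z) l -> F32 a b c d e z = l.
Proof. apply Cseries_value_eq. Qed.

Lemma Cpoch_shift_S_neq0 (d : Cx) (q : nat) : (forall k, d + CofNat k <> RtoC 0) ->
  Cpoch (d + RtoC 1) q <> RtoC 0.
Proof.
  intros Hd. apply Cpoch_neq0. intros t Ht.
  replace (d + RtoC 1 + CofNat t) with (d + CofNat (S t)) by (rewrite CofNat_S; ring).
  apply Hd.
Qed.

Lemma Cpoch_ratio (d : Cx) (k : nat) : d + CofNat k <> RtoC 0 ->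
  Cpoch d k = d * Cpoch (d + RtoC 1) k / (d + CofNat k).
Proof.
  intros Hk. rewrite <- Cpoch_S_l. change (Cpoch d (S k)) with (Cpoch d k * (d + CofNat k)).
  field. auto.
Qed.

Lemma F21_term_ratio (d z : Cx) (k : nat) : (forall k, d + CofNat k <> RtoC 0) ->
  F21_term (RtoC 1) d (d + RtoC 1) z k = d / (d + CofNat k) * z ^ k.
Proof.
  intros Hd. unfold F21_term. rewrite Cpoch_1, Cpoch_ratio by auto.
  assert (Hp := Cpoch_shift_S_neq0 d k Hd). assert (Hf := CofNat_fact_neq0 k).
  field. auto.
Qed.

Lemma F32_term_ratio (n : nat) (a d z : Cx) (k : nat) :
  (forall k, d + CofNat k <> RtoC 0) -> (forall k, a + RtoC 1 + CofNat k <> RtoC 0) ->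
  F32_term (RtoC 1) d (CofNat (S (S n)) + a) (d + RtoC 1) (a + RtoC 1) z k
  = d / (d + CofNat k) * Cpoch (a + CofNat k + RtoC 1) (S n) / Cpoch (a + RtoC 1) (S n) * z ^ k.
Proof.
  intros Hd Ha. unfold F32_term. rewrite Cpoch_1, Cpoch_ratio by auto.
  assert (Hp := Cpoch_shift_S_neq0 d k Hd). assert (Hf := CofNat_fact_neq0 k).
  assert (Hpa : forall q, Cpoch (a + RtoC 1) q <> RtoC 0) by (intros; apply Cpoch_neq0; auto).
  assert (E : Cpoch (a + RtoC 1) (S n) * Cpoch (CofNat (S (S n)) + a) k
              = Cpoch (a + RtoC 1) k * Cpoch (a + CofNat k + RtoC 1) (S n)).
  { transitivity (Cpoch (a + RtoC 1) (S n + k)).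
    - rewrite Cpoch_add. do 2 f_equal. rewrite (CofNat_S (S n)). ring.
    - rewrite Nat.add_comm, Cpoch_add. do 2 f_equal. ring. }
  replace (Cpoch (CofNat (S (S n)) + a) k)
    with (Cpoch (a + RtoC 1) k * Cpoch (a + CofNat k + RtoC 1) (S n) / Cpoch (a + RtoC 1) (S n))
    by (rewrite <- E; field; auto).
  field. repeat split; auto.
Qed.

Lemma Cnorm_le_add_nat (d : Cx) (k : nat) : (2 * Rabs (Re d) <= INR k)%R ->
  (Cnorm d <= Cnorm (d + CofNat k))%R.
Proof.
  intros H. pose proof (pos_INR k). unfold Cnorm. simpl. rewrite Rplus_0_r.
  pose proof (Rle_0_sqr (Re d)). pose proof (Rle_0_sqr (Im d)).
  pose proof (Rle_0_sqr (Re d + INR k)). unfold Rsqr in *.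
  apply sqrt_le_1; [lra | lra |].
  destruct (Rle_dec 0 (Re d)).
  - rewrite Rabs_pos_eq in H by auto. nra.
  - rewrite Rabs_left in H by lra. nra.
Qed.

Lemma ratio_series_cv (d z : Cx) : (forall k, d + CofNat k <> RtoC 0) -> (Cnorm z < 1)%R ->
  exists G, Cseries_cv (fun k => d / (d + CofNat k) * z ^ k) G.
Proof.
  intros Hd Hz. destruct (INR_unbounded (2 * Rabs (Re d))) as [K0 HK0].
  apply Cseries_cv_comparison with (fun k => Cnorm z ^ k)%R K0.
  - intros k Hk. rewrite Cnorm_mul, Cnorm_pow.
    assert (Cnorm (d / (d + CofNat k)) <= 1)%R.
    { unfold Cdiv. rewrite Cnorm_mul, Cnorm_inv by auto.
      assert (Hp := Cnorm_pos _ (Hd k)).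
      apply Rmult_le_reg_r with (Cnorm (d + CofNat k)); auto.
      rewrite Rmult_assoc, Rinv_l, Rmult_1_r, Rmult_1_l by lra.
      apply Cnorm_le_add_nat. apply le_INR in Hk. lra. }
    pose proof (pow_le (Cnorm z) k (Cnorm_ge0 z)). nra.
  - apply ex_series_geom. rewrite Rabs_pos_eq by apply Cnorm_ge0. auto.
Qed.

Section Hypergeometric.
Variables (n : nat) (a b c : Cx).
Hypothesis Hb : forall k : nat, b <> - CofNat (S k).
Hypothesis Hc : (1 < Cnorm (c + RtoC 1))%R.
Hypothesis Hab : forall k : nat, a - b <> - CofNat k.
Hypothesis Ha : forall k : nat, a <> - CofNat (S k).

Let z := RtoC 1 / (c + RtoC 1).
Let d := a - b.

Lemma d_shift_neq0 (k : nat) : d + CofNat k <> RtoC 0.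
Proof.
  intro H. apply (Hab k). replace (a - b) with (d + CofNat k - CofNat k) by (unfold d; ring).
  rewrite H. ring.
Qed.
Lemma a_shift_neq0 (k : nat) : a + RtoC 1 + CofNat k <> RtoC 0.
Proof.
  intro H. apply (Ha k).
  replace a with (a + RtoC 1 + CofNat k - CofNat (S k)) by (rewrite CofNat_S; ring).
  rewrite H. ring.
Qed.

Lemma F32_term_split (K : nat) :
  F32_term (RtoC 1) d (CofNat (S (S n)) + a) (d + RtoC 1) (a + RtoC 1) z K
  = Cpoch (b + RtoC 1) (S n) / Cpoch (a + RtoC 1) (S n)
    * (d * (gen_coef n a b K * z ^ K) + F21_term (RtoC 1) d (d + RtoC 1) z K).
Proof.
  rewrite F32_term_ratio, F21_term_ratio by (apply d_shift_neq0 || apply a_shift_neq0).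
  assert (Hp := Cpoch_b1_neq0 b Hb (S n)). assert (Hk := d_shift_neq0 K).
  assert (Hpa : Cpoch (a + RtoC 1) (S n) <> RtoC 0)
    by (apply Cpoch_neq0; intros; apply a_shift_neq0).
  assert (Eg := gen_coef_spec n a b K Hp). fold d in Eg.
  replace (gen_coef n a b K) with ((d + CofNat K) * gen_coef n a b K / (d + CofNat K))
    by (field; auto).
  rewrite Eg. field. auto.
Qed.

Lemma Sdouble_hypergeometric :
  ((a - b) * (c + RtoC 1)) / ((CofNat (S n) + b) * c) * Sdouble n a b c
  = Cpoch (a + RtoC 1) (S n) / Cpoch (b + RtoC 1) (S n)
      * F32 (RtoC 1) (a - b) (CofNat (S (S n)) + a) (a - b + RtoC 1) (a + RtoC 1)
            (RtoC 1 / (c + RtoC 1))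
    - F21 (RtoC 1) (a - b) (a - b + RtoC 1) (RtoC 1 / (c + RtoC 1)).
Proof.
  destruct (ratio_series_cv d z d_shift_neq0 (inv_c1_norm_lt1 c Hc)) as [G HG].
  assert (HF21 : Cseries_cv (F21_term (RtoC 1) d (d + RtoC 1) z) G).
  { eapply Cseries_cv_ext; [|exact HG]. intros. symmetry. apply F21_term_ratio, d_shift_neq0. }
  set (L := (c + RtoC 1) / c * Sdouble n a b c / (CofNat (S n) + b)).
  assert (HF32 : Cseries_cv (F32_term (RtoC 1) d (CofNat (S (S n)) + a) (d + RtoC 1) (a + RtoC 1) z)
                   (Cpoch (b + RtoC 1) (S n) / Cpoch (a + RtoC 1) (S n) * (d * L + G))).
  { eapply Cseries_cv_ext; [intros K; symmetry; apply F32_term_split|].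
    apply Cseries_cv_scal, Cseries_cv_add; auto.
    apply Cseries_cv_scal, Sdouble_generating; auto. }
  fold z d. rewrite (F32_eq _ _ _ _ _ _ _ HF32), (F21_eq _ _ _ _ _ HF21). unfold L, d.
  assert (Hp := Cpoch_b1_neq0 b Hb (S n)). assert (HN := nb_neq0 n b Hb).
  assert (Hpa : Cpoch (a + RtoC 1) (S n) <> RtoC 0)
    by (apply Cpoch_neq0; intros; apply a_shift_neq0).
  assert (H0 := c_neq0 c Hc).
  field. auto.
Qed.

End Hypergeometric.

(** What [Re] and [Im] have in common; it lets one argument treat the real and
    imaginary parts of the logarithmic series. *)
Definition Rcomponent (proj : Cx -> R) : Prop :=
  (forall (x : R) (w : Cx), proj (RtoC x * w) = (x * proj w)%R) /\
  (forall w w', proj (w + w') = (proj w + proj w')%R) /\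
  (forall s l, Ccv s l -> Un_cv (fun N => proj (s N)) (proj l)) /\
  (forall w, (Rabs (proj w) <= Cnorm w)%R).

Lemma Rcomponent_Re : Rcomponent Re.
Proof.
  repeat split; [intros; simpl; ring | intros s l []; auto | apply Rabs_Re_le_Cnorm].
Qed.
Lemma Rcomponent_Im : Rcomponent Im.
Proof.
  repeat split; [intros; simpl; ring | intros s l []; auto | apply Rabs_Im_le_Cnorm].
Qed.

Lemma Rcomponent_0 (proj : Cx -> R) : Rcomponent proj -> proj (RtoC 0) = 0%R.
Proof.
  intros (Hlin & _). replace (RtoC 0) with (RtoC 0 * RtoC 0) by ring. rewrite Hlin. ring.
Qed.

Lemma Rcomponent_Csum (proj : Cx -> R) (f : nat -> Cx) (N : nat) : Rcomponent proj ->
  proj (Csum (S N) f) = sum_f_R0 (fun k => proj (f k)) N.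
Proof.
  intros Hp. assert (H0 := Rcomponent_0 proj Hp). destruct Hp as (Hlin & Hadd & _).
  induction N; simpl in *; rewrite Hadd; [rewrite H0; ring|]. rewrite IHN. reflexivity.
Qed.

Lemma Series_Rcomponent (proj : Cx -> R) (f : nat -> Cx) (l : Cx) (u : nat -> R) :
  Rcomponent proj -> (forall k, u k = proj (f k)) -> Cseries_cv f l -> Series u = proj l.
Proof.
  intros Hp E H. apply is_series_unique, is_series_Reals.
  destruct Hp as (Hlin & Hadd & Hcv & Hnorm).
  apply Hcv, (Un_cv_shift _ _ 1) in H. eapply Un_cv_ext; [|exact H].
  intros N. cbv beta. rewrite Nat.add_1_r, Rcomponent_Csum by (repeat split; auto).
  apply sum_eq. intros; symmetry; apply E.
Qed.

Lemma is_derive_0_const (f : R -> R) :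
  (forall t, (Rabs t <= 1)%R -> is_derive f t 0%R) -> f 1%R = f 0%R.
Proof.
  intros H. destruct (MVT_gen f 0 1 (fun _ => 0%R)) as [c0 [_ Hc0]].
  - intros x Hx. rewrite Rmin_left, Rmax_right in Hx by lra.
    apply H. rewrite Rabs_pos_eq; lra.
  - intros x Hx. rewrite Rmin_left, Rmax_right in Hx by lra.
    apply continuity_pt_filterlim, (ex_derive_continuous f x). exists 0%R.
    apply H. rewrite Rabs_pos_eq; lra.
  - lra.
Qed.

Lemma pow_le_1 (x : R) (n : nat) : (0 <= x <= 1)%R -> (x ^ n <= 1)%R.
Proof.
  intros H. induction n; simpl; [lra|].
  pose proof (pow_le x n (proj1 H)). nra.
Qed.

Lemma ln_sqrt (x : R) : (0 < x)%R -> ln (sqrt x) = (ln x / 2)%R.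
Proof.
  intros H. assert (Hs : (0 < sqrt x)%R) by (apply sqrt_lt_R0; auto).
  rewrite <- (sqrt_sqrt x) at 2 by lra. rewrite ln_mult by auto. field.
Qed.

Section Log.
Variable z : Cx.
Hypothesis Hz : (Cnorm z < 1)%R.
Let p := Re z.
Let q := Im z.
Let r := Cnorm z.
Local Open Scope R_scope.

(** The coefficients of the real power series [t |-> proj (sum_k (t z)^(k+1)/(k+1))]. *)
Definition log_coef (proj : Cx -> R) (j : nat) : R :=
  match j with O => 0 | S k => proj (z ^ S k)%Cx / INR (S k) end.

Lemma log_coef_bound (proj : Cx -> R) (j : nat) : Rcomponent proj ->
  Rabs (log_coef proj j) <= r ^ j.
Proof.
  intros (_ & _ & _ & Hnorm). destruct j; unfold log_coef.
  - rewrite Rabs_R0. lra.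
  - assert (HS : 1 <= INR (S j)) by (rewrite S_INR; pose proof (pos_INR j); lra).
    rewrite Rabs_div, (Rabs_pos_eq (INR (S j))) by (lra || apply pos_INR).
    unfold r. rewrite <- Cnorm_pow. pose proof (Hnorm (z ^ S j)%Cx).
    pose proof (Rabs_pos (proj (z ^ S j)%Cx)).
    apply Rmult_le_reg_r with (INR (S j)); [lra|].
    unfold Rdiv. rewrite Rmult_assoc, Rinv_l by lra. nra.
Qed.

(** The radius of convergence exceeds [2/(1+r) > 1]. *)
Lemma CV_radius_gt_1 (a : nat -> R) : (forall j, Rabs (a j) <= r ^ j) ->
  forall t, Rabs t <= 1 -> Rbar_lt (Rabs t) (CV_radius a).
Proof.
  intros Ha t Ht. set (rho := 2 / (1 + r)).
  assert (Hr : 0 <= r) by apply Cnorm_ge0.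
  assert (Hr1 : r < 1) by exact Hz.
  assert (Hrho : 1 < rho).
  { unfold rho. apply Rmult_lt_reg_r with (1 + r); [lra|].
    unfold Rdiv. rewrite Rmult_assoc, Rinv_l; lra. }
  assert (Hrr : r * rho <= 1).
  { unfold rho. apply Rmult_le_reg_r with (1 + r); [lra|].
    replace (r * (2 / (1 + r)) * (1 + r)) with (2 * r * ((1 + r) * / (1 + r)))
      by (unfold Rdiv; ring).
    rewrite Rinv_r; lra. }
  assert (H : Rbar_le rho (CV_radius a)).
  { apply (proj1 (CV_radius_bounded a)). exists 1. intros k.
    rewrite Rabs_mult. apply Rle_trans with (r ^ k * rho ^ k).
    - apply Rmult_le_compat; auto using Rabs_pos.
      rewrite <- RPow_abs, Rabs_pos_eq; lra.
    - rewrite <- Rpow_mult_distr. apply pow_le_1. split; [apply Rmult_le_pos|]; lra. }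
  destruct (CV_radius a) as [R0| |]; simpl in *; auto. lra.
Qed.

Lemma log_psum_cv (proj : Cx -> R) : Rcomponent proj ->
  Un_cv (fun N => proj (Csum N (fun k => z ^ S k / CofNat (S k))%Cx)) (PSeries (log_coef proj) 1).
Proof.
  intros Hp.
  assert (H1 := CV_radius_gt_1 (log_coef proj) (fun j => log_coef_bound proj j Hp) 1).
  rewrite Rabs_R1 in H1. specialize (H1 (Rle_refl _)).
  assert (H2 := CV_disk_inside (log_coef proj) 1). rewrite Rabs_R1 in H2.
  apply ex_series_Rabs, Series_correct, is_series_Reals in H2; auto.
  eapply Un_cv_ext; [|exact H2]. intros N. cbv beta.
  assert (H0 := Rcomponent_0 proj Hp). destruct Hp as (Hlin & Hadd & _).
  induction N; cbn [sum_f_R0 Csum]; [rewrite H0; simpl; ring|].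
  rewrite Hadd, IHN, pow1, Rmult_1_r. f_equal.
  unfold log_coef, Cdiv, CofNat. rewrite Cinv_RtoC by (apply not_0_INR; lia).
  rewrite Cx_ring.(Rmul_comm), Hlin. unfold Rdiv. ring.
Qed.

Lemma re_one_sub_tz_pos (t : R) : Rabs t <= 1 -> 0 < 1 - t * p.
Proof.
  intros Ht. assert (Hp : Rabs p <= r) by apply Rabs_Re_le_Cnorm.
  assert (Rabs (t * p) <= r).
  { rewrite Rabs_mult. apply Rle_trans with (1 * Rabs p); [|lra].
    apply Rmult_le_compat_r; auto using Rabs_pos. }
  pose proof (Rle_abs (t * p)). unfold r in *. lra.
Qed.

Lemma norm2_one_sub_tz_pos (t : R) : Rabs t <= 1 -> 0 < (1 - t * p) ^ 2 + (t * q) ^ 2.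
Proof. intros Ht. pose proof (re_one_sub_tz_pos t Ht). pose proof (pow2_ge_0 (t * q)). nra. Qed.

Lemma PSeries_derive_log_coef (proj : Cx -> R) (t : R) : Rcomponent proj -> Rabs t <= 1 ->
  PSeries (PS_derive (log_coef proj)) t = proj (z * Cinv (RtoC 1 - RtoC t * z))%Cx.
Proof.
  intros Hp Ht.
  assert (Hw : (Cnorm (RtoC t * z) < 1)%R).
  { rewrite Cnorm_mul, Cnorm_RtoC. pose proof (Cnorm_ge0 z).
    apply Rle_lt_trans with (1 * Cnorm z); [apply Rmult_le_compat_r|]; lra. }
  assert (G := Cseries_cv_scal z _ _ (binom_series (RtoC t * z) 0 Hw)).
  replace (z * ((RtoC t * z) ^ 0 / (RtoC 1 - RtoC t * z) ^ 1))%Cx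
    with (z * Cinv (RtoC 1 - RtoC t * z))%Cx in G
    by (simpl; field; apply Cnorm_lt1_sub_neq0; auto).
  eapply (Series_Rcomponent proj _ _ _ Hp); [|exact G].
  intros k. unfold PS_derive, log_coef. rewrite Cbinom_0, Cpow_mul, Cpow_RtoC.
  replace (z * (RtoC 1 * (RtoC (t ^ k) * z ^ k)))%Cx with (RtoC (t ^ k) * z ^ S k)%Cx
    by (simpl; ring).
  destruct Hp as (Hlin & _). rewrite Hlin. field. apply not_0_INR. lia.
Qed.

(** [Re (-log(1-tz)) = -ln|1-tz|] and [Im (-log(1-tz)) = -arg(1-tz)] have the same
    derivatives as the series, and all vanish at [t = 0]. *)
Lemma PSeries_log_coef_Re : PSeries (log_coef Re) 1 = - (ln ((1 - 1 * p) ^ 2 + (1 * q) ^ 2) / 2).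
Proof.
  set (h := fun t => PSeries (log_coef Re) t + ln ((1 - t * p) ^ 2 + (t * q) ^ 2) / 2).
  assert (E : h 1 = h 0).
  { apply is_derive_0_const. intros t Ht.
    assert (HD := norm2_one_sub_tz_pos t Ht).
    assert (H1 := is_derive_PSeries (log_coef Re) t
                    (CV_radius_gt_1 _ (fun j => log_coef_bound Re j Rcomponent_Re) t Ht)).
    rewrite PSeries_derive_log_coef in H1 by (auto using Rcomponent_Re).
    assert (H2 : is_derive (fun t => ln ((1 - t * p) ^ 2 + (t * q) ^ 2) / 2) t
                   (- Re (z * Cinv (RtoC 1 - RtoC t * z))%Cx)).
    { simpl in HD |- *. auto_derive; [nra|]. unfold p, q in *. field. nra. }
    replace 0 with (plus (Re (z * Cinv (RtoC 1 - RtoC t * z))%Cx)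
                         (- Re (z * Cinv (RtoC 1 - RtoC t * z))%Cx))
      by (unfold plus; simpl; ring).
    exact (is_derive_plus _ _ _ _ _ H1 H2). }
  unfold h in E. rewrite PSeries_0 in E. simpl (log_coef Re 0) in E.
  replace ((1 - 0 * p) ^ 2 + (0 * q) ^ 2) with 1 in E by ring. rewrite ln_1 in E. lra.
Qed.

Lemma PSeries_log_coef_Im : PSeries (log_coef Im) 1 = atan (1 * q / (1 - 1 * p)).
Proof.
  set (h := fun t => PSeries (log_coef Im) t - atan (t * q / (1 - t * p))).
  assert (E : h 1 = h 0).
  { apply is_derive_0_const. intros t Ht.
    assert (HD := norm2_one_sub_tz_pos t Ht). assert (Htp := re_one_sub_tz_pos t Ht).
    assert (H1 := is_derive_PSeries (log_coef Im) t
                    (CV_radius_gt_1 _ (fun j => log_coef_bound Im j Rcomponent_Im) t Ht)).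
    rewrite PSeries_derive_log_coef in H1 by (auto using Rcomponent_Im).
    assert (H2 : is_derive (fun t => - atan (t * q / (1 - t * p))) t
                   (- Im (z * Cinv (RtoC 1 - RtoC t * z))%Cx)).
    { simpl in HD |- *. auto_derive; [lra|]. unfold p, q in *. field.
      repeat split; try lra; nra. }
    replace 0 with (plus (Im (z * Cinv (RtoC 1 - RtoC t * z))%Cx)
                         (- Im (z * Cinv (RtoC 1 - RtoC t * z))%Cx))
      by (unfold plus; simpl; ring).
    exact (is_derive_plus _ _ _ _ _ H1 H2). }
  unfold h in E. rewrite PSeries_0 in E. simpl (log_coef Im 0) in E.
  replace (0 * q / (1 - 0 * p)) with 0 in E by (field; lra). rewrite atan_0 in E. lra.
Qed.

Lemma log_series :
  Cseries_cv (fun k => z ^ S k / CofNat (S k))%Cx (- Clog (RtoC 1 - z))%Cx.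
Proof.
  assert (HD := norm2_one_sub_tz_pos 1). assert (Ht := re_one_sub_tz_pos 1).
  rewrite Rabs_R1 in HD, Ht. specialize (HD (Rle_refl _)). specialize (Ht (Rle_refl _)).
  split.
  - replace (Re (- Clog (RtoC 1 - z))%Cx) with (PSeries (log_coef Re) 1);
      [apply log_psum_cv, Rcomponent_Re|].
    rewrite PSeries_log_coef_Re. simpl Re. unfold Cnorm. rewrite ln_sqrt.
    + do 3 f_equal. simpl. unfold p, q. ring.
    + simpl. simpl in HD. unfold p, q in HD. nra.
  - replace (Im (- Clog (RtoC 1 - z))%Cx) with (PSeries (log_coef Im) 1);
      [apply log_psum_cv, Rcomponent_Im|].
    rewrite PSeries_log_coef_Im. simpl Im. unfold Carg. simpl Re. simpl Im.
    destruct (Rlt_dec 0 (1 + - Re z)) as [Hr|Hr]; [|unfold p in Ht; lra].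
    replace ((0 + - Im z) / (1 + - Re z)) with (- (1 * q / (1 - 1 * p)))
      by (unfold p, q; field; unfold p in Ht; lra).
    rewrite atan_opp. ring.
Qed.

End Log.

Lemma ex_series_inv_succ_succ2 : ex_series (fun k => / (INR (S k) * INR (S (S k))))%R.
Proof.
  exists 1%R. apply is_series_Reals.
  assert (E : forall N, sum_f_R0 (fun k => / (INR (S k) * INR (S (S k))))%R N
                        = (1 - / INR (S (S N)))%R).
  { induction N.
    - simpl. field.
    - rewrite tech5, IHN. assert (0 < INR (S N))%R by (apply lt_0_INR; lia).
      rewrite !S_INR in *. field. lra. }
  intros eps He. destruct (CV_shift' _ 1 _ RinvN_cv eps He) as [N HN].
  exists N. intros k Hk. specialize (HN k Hk). unfold Rdist in *. rewrite E.
  replace (pos (RinvN (k + 1))) with (/ INR (S (S k)))%R in HN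
    by (unfold RinvN; cbn [pos]; rewrite Nat.add_1_r, (S_INR (S k)); reflexivity).
  replace (1 - / INR (S (S k)) - 1)%R with (- (/ INR (S (S k)) - 0))%R by ring.
  rewrite Rabs_Ropp. exact HN.
Qed.

Lemma digamma_series_cv (w : Cx) : (forall k, CofNat k + w <> RtoC 0) ->
  exists l, Cseries_cv (fun k => Cinv (CofNat (S k)) - Cinv (CofNat k + w)) l.
Proof.
  intros Hw. destruct (INR_unbounded (2 - 2 * Re w)) as [K0 HK0].
  apply Cseries_cv_comparison
    with (fun k => 2 * Cnorm (w - RtoC 1) * / (INR (S k) * INR (S (S k))))%R K0.
  - intros k Hk. apply le_INR in Hk.
    replace (Cinv (CofNat (S k)) - Cinv (CofNat k + w))
      with ((w - RtoC 1) * Cinv (CofNat (S k)) * Cinv (CofNat k + w))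
      by (rewrite CofNat_S; field; split; [auto | rewrite <- CofNat_S; apply CofNat_S_neq0]).
    rewrite !Cnorm_mul, !Cnorm_inv by (auto; apply CofNat_S_neq0).
    unfold CofNat at 1. rewrite Cnorm_RtoC, Rabs_pos_eq by apply pos_INR.
    assert (H1 : (INR (S (S k)) / 2 <= Cnorm (CofNat k + w))%R).
    { pose proof (Re_le_Cnorm (CofNat k + w)). simpl Re in H. rewrite !S_INR. lra. }
    assert (H2 : (0 < INR (S k))%R) by (apply lt_0_INR; lia).
    assert (H3 : (0 < INR (S (S k)))%R) by (apply lt_0_INR; lia).
    assert (H4 : (/ Cnorm (CofNat k + w) <= 2 * / INR (S (S k)))%R).
    { replace (2 * / INR (S (S k)))%R with (/ (INR (S (S k)) / 2))%R by (field; lra).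
      apply Rinv_le_contravar; lra. }
    pose proof (Cnorm_ge0 (w - RtoC 1)). rewrite Rinv_mult.
    apply Rle_trans with (Cnorm (w - RtoC 1) * / INR (S k) * (2 * / INR (S (S k))))%R;
      [|right; ring].
    apply Rmult_le_compat_l; auto. apply Rmult_le_pos; auto. left; apply Rinv_0_lt_compat; auto.
  - exact (ex_series_scal_l (2 * Cnorm (w - RtoC 1))%R _ ex_series_inv_succ_succ2).
Qed.

Lemma Cdigamma_succ (w : Cx) : (forall k, CofNat k + w <> RtoC 0) ->
  Cdigamma (w + RtoC 1) - Cdigamma w = Cinv w.
Proof.
  intros Hw.
  assert (Hw1 : forall k, CofNat k + (w + RtoC 1) <> RtoC 0).
  { intros k. replace (CofNat k + (w + RtoC 1)) with (CofNat (S k) + w)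
      by (rewrite CofNat_S; ring). apply Hw. }
  destruct (digamma_series_cv w Hw) as [B HB].
  destruct (digamma_series_cv (w + RtoC 1) Hw1) as [A HA].
  unfold Cdigamma. rewrite (Cseries_value_eq _ _ HA), (Cseries_value_eq _ _ HB).
  assert (HT : Cseries_cv (fun k => (Cinv (CofNat (S k)) - Cinv (CofNat k + (w + RtoC 1)))
                                    - (Cinv (CofNat (S k)) - Cinv (CofNat k + w))) (Cinv w)).
  { apply Ccv_ext with (fun N => Cinv (CofNat 0 + w) - Cinv (CofNat N + w)).
    - intros N. set (v := fun k => - Cinv (CofNat k + w)).
      transitivity (Csum N (fun k => v (S k) - v k)); [rewrite Csum_telescope; unfold v; ring|].
      apply Csum_ext. intros k _. unfold v.
      replace (CofNat k + (w + RtoC 1)) with (CofNat (S k) + w) by (rewrite CofNat_S; ring).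
      ring.
    - replace (Cinv w) with (Cinv (CofNat 0 + w) - RtoC 0)
        by (rewrite CofNat_0; replace (RtoC 0 + w) with w by ring; ring).
      apply Ccv_sub; [apply Ccv_const | apply Ccv_inv_shift0]. }
  rewrite <- (Ccv_unique _ _ _ (Cseries_cv_sub _ _ _ _ HA HB) HT). ring.
Qed.

Lemma Cdigamma_shift_sum (y : Cx) (n : nat) : (forall k, CofNat k + y <> RtoC 0) ->
  Cdigamma (y + CofNat (S n)) - Cdigamma y = Csum (S n) (fun i => RtoC 1 / (y + CofNat i)).
Proof.
  intros Hy. induction n.
  - replace (y + CofNat 1) with (y + RtoC 1) by (apply Cx_ext; simpl; ring).
    rewrite Cdigamma_succ by auto. simpl. rewrite CofNat_0.
    replace (y + RtoC 0) with y by ring.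
    assert (y <> RtoC 0) by (intro H; apply (Hy 0%nat); rewrite CofNat_0, H; ring).
    field. auto.
  - change (Csum (S (S n)) ?f) with (Csum (S n) f + f (S n)). rewrite <- IHn.
    assert (Hs : forall k, CofNat k + (y + CofNat (S n)) <> RtoC 0).
    { intros k. replace (CofNat k + (y + CofNat (S n))) with (CofNat (k + S n) + y)
        by (rewrite CofNat_add; ring). apply Hy. }
    assert (H0 : y + CofNat (S n) <> RtoC 0)
      by (intro H; apply (Hs 0%nat); rewrite CofNat_0, H; ring).
    replace (y + CofNat (S (S n))) with ((y + CofNat (S n)) + RtoC 1)
      by (rewrite (CofNat_S (S n)); ring).
    replace (Cdigamma (y + CofNat (S n) + RtoC 1) - Cdigamma y)
      with ((Cdigamma (y + CofNat (S n) + RtoC 1) - Cdigamma (y + CofNat (S n)))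
            + (Cdigamma (y + CofNat (S n)) - Cdigamma y)) by ring.
    rewrite (Cdigamma_succ _ Hs). field. auto.
Qed.

(** * Part (iii): the degenerate case [a = b - m] *)

Lemma F32_term_degenerate (n : nat) (b z : Cx) (k : nat) (Hb : forall k, b <> - CofNat (S k)) :
  (CofNat (S (S n)) + b) / (b + RtoC 1) * z
    * F32_term (RtoC 1) (RtoC 1) (CofNat (S (S (S n))) + b) (RtoC 2) (b + RtoC 2) z k
  = Cpoch (b + RtoC 1 + CofNat (S k)) (S n) / Cpoch (b + RtoC 1) (S n)
    * (z ^ S k / CofNat (S k)).
Proof.
  set (y := b + RtoC 1).
  assert (Hb2 : b + RtoC 2 = y + RtoC 1) by (unfold y; apply Cx_ext; simpl; ring).
  assert (E : (CofNat (S (S n)) + b) * Cpoch (CofNat (S (S (S n))) + b) k * Cpoch y (S n)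
              = Cpoch (y + CofNat (S k)) (S n) * (y * Cpoch (b + RtoC 2) k)).
  { transitivity (Cpoch y (S n + S k)).
    - rewrite Cpoch_add, (Cpoch_S_l (y + CofNat (S n)) k).
      replace (y + CofNat (S n)) with (CofNat (S (S n)) + b)
        by (unfold y; rewrite (CofNat_S (S n)); ring).
      replace (CofNat (S (S n)) + b + RtoC 1) with (CofNat (S (S (S n))) + b)
        by (rewrite (CofNat_S (S (S n))); ring).
      ring.
    - rewrite Nat.add_comm, Cpoch_add, (Cpoch_S_l y k), Hb2. ring. }
  assert (Hy : y <> RtoC 0) by (apply b1_neq0; auto).
  assert (Hn2 : CofNat (S (S n)) + b <> RtoC 0) by (apply (nb_neq0 (S n)); auto).
  assert (Hp2 : Cpoch (b + RtoC 2) k <> RtoC 0).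
  { replace (b + RtoC 2) with (b + RtoC 1 + CofNat 1) by (apply Cx_ext; simpl; ring).
    apply Cpoch_b_shift_neq0; auto. }
  assert (Hp := Cpoch_b1_neq0 b Hb (S n)). fold y in Hp.
  unfold F32_term. rewrite Cpoch_1, Cpoch_2, CofNat_fact_S.
  replace (Cpoch (CofNat (S (S (S n))) + b) k)
    with (Cpoch (y + CofNat (S k)) (S n) * (y * Cpoch (b + RtoC 2) k)
          / ((CofNat (S (S n)) + b) * Cpoch y (S n)))
    by (rewrite <- E; field; auto).
  assert (Hf := CofNat_fact_neq0 k). assert (Hk := CofNat_S_neq0 k).
  simpl (z ^ S k). field. repeat split; auto.
Qed.

Section Degenerate.
Variables (n : nat) (b c : Cx) (m : nat).
Hypothesis Hb : forall k : nat, b <> - CofNat (S k).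
Hypothesis Hc : (1 < Cnorm (c + RtoC 1))%R.

Let a := b - CofNat m.
Let z := RtoC 1 / (c + RtoC 1).
Let PY := Cpoch (b + RtoC 1) (S n).
Let u (K : nat) := gen_coef n a b K * z ^ K.

Lemma c1_pow_mul_z_pow (k : nat) : (c + RtoC 1) ^ k * z ^ k = RtoC 1.
Proof. apply Cpow_mul_eq1. unfold z. field. apply c1_neq0; auto. Qed.

Lemma gen_term_diag :
  (c + RtoC 1) ^ m * u m = Csum (S n) (fun i => RtoC 1 / (b + RtoC 1 + CofNat i)).
Proof.
  unfold u, gen_coef. replace (a + CofNat m + RtoC 1) with (b + RtoC 1) by (unfold a; ring).
  rewrite poch_divdiff_diag by (intros; apply b_shift_neq0; auto).
  assert (HP := Cpoch_b1_neq0 b Hb (S n)).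
  transitivity (Csum (S n) (fun i => RtoC 1 / (b + RtoC 1 + CofNat i))
                * ((c + RtoC 1) ^ m * z ^ m));
    [field; auto | rewrite c1_pow_mul_z_pow; ring].
Qed.

Lemma gen_terms_below :
  (c + RtoC 1) ^ m * Csum m u
  = - Csum m (fun l => (c + RtoC 1) ^ (S l) / CofNat (S l)
                       * (Cpoch (b + RtoC 1 - CofNat (S l)) (S n) / PY - RtoC 1)).
Proof.
  rewrite Csum_rev, <- Csum_scal.
  replace (- Csum m _) with (- RtoC 1 * Csum m (fun l => (c + RtoC 1) ^ (S l) / CofNat (S l)
                       * (Cpoch (b + RtoC 1 - CofNat (S l)) (S n) / PY - RtoC 1))) by ring.
  rewrite <- Csum_scal. apply Csum_ext. intros l Hl.
  set (K := (m - 1 - l)%nat). assert (HK : m = (K + S l)%nat) by (unfold K; lia).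
  assert (HP := Cpoch_b1_neq0 b Hb (S n)). assert (Hk := CofNat_S_neq0 l).
  assert (Eg := gen_coef_spec n a b K HP).
  replace (a - b + CofNat K) with (- CofNat (S l)) in Eg
    by (unfold a; rewrite HK, CofNat_add; ring).
  replace (a + CofNat K + RtoC 1) with (b + RtoC 1 - CofNat (S l)) in Eg
    by (unfold a; rewrite HK, CofNat_add; ring).
  unfold u. fold PY in Eg |- *.
  replace (gen_coef n a b K) with (- (- CofNat (S l) * gen_coef n a b K) / CofNat (S l))
    by (field; auto).
  rewrite Eg, HK, Cpow_add.
  transitivity (- ((Cpoch (b + RtoC 1 - CofNat (S l)) (S n) / PY - RtoC 1) / CofNat (S l)
                   * (c + RtoC 1) ^ S l * ((c + RtoC 1) ^ K * z ^ K))); [field; auto|].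
  rewrite c1_pow_mul_z_pow. field. auto.
Qed.

Lemma Cdigamma_diff_degenerate :
  Cdigamma (CofNat (S (S n)) + b) - Cdigamma (b + RtoC 1)
  = Csum (S n) (fun i => RtoC 1 / (b + RtoC 1 + CofNat i)).
Proof.
  replace (CofNat (S (S n)) + b) with (b + RtoC 1 + CofNat (S n))
    by (rewrite (CofNat_S (S n)); ring).
  apply Cdigamma_shift_sum. intros k. rewrite Cx_ring.(Radd_comm). apply b_shift_neq0; auto.
Qed.

Lemma F32_term_gen_tail (k : nat) :
  (CofNat (S (S n)) + b) / ((b + RtoC 1) * (c + RtoC 1))
    * F32_term (RtoC 1) (RtoC 1) (CofNat (S (S (S n))) + b) (RtoC 2) (b + RtoC 2) z k
  = (c + RtoC 1) ^ m * u (S m + k) + z ^ S k / CofNat (S k).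
Proof.
  assert (Hc1 := c1_neq0 c Hc). assert (HP := Cpoch_b1_neq0 b Hb (S n)).
  assert (Hk := CofNat_S_neq0 k). assert (Hy := b1_neq0 b Hb).
  replace ((CofNat (S (S n)) + b) / ((b + RtoC 1) * (c + RtoC 1)))
    with ((CofNat (S (S n)) + b) / (b + RtoC 1) * z) by (unfold z; field; auto).
  rewrite F32_term_degenerate by auto.
  assert (Eg := gen_coef_spec n a b (S m + k) HP).
  replace (a - b + CofNat (S m + k)) with (CofNat (S k)) in Eg
    by (unfold a; rewrite CofNat_add, !CofNat_S; ring).
  replace (a + CofNat (S m + k) + RtoC 1) with (b + RtoC 1 + CofNat (S k)) in Eg
    by (unfold a; rewrite CofNat_add, !CofNat_S; ring).
  unfold u.
  replace (gen_coef n a b (S m + k))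
    with (CofNat (S k) * gen_coef n a b (S m + k) / CofNat (S k))
    by (field; auto).
  rewrite Eg. replace (z ^ (S m + k)) with (z ^ m * z ^ S k) by (rewrite <- Cpow_add; f_equal; lia).
  assert (Hzm : z ^ m <> RtoC 0).
  { intro E. apply RtoC_1_neq_0. rewrite <- (c1_pow_mul_z_pow m), E. ring. }
  replace ((c + RtoC 1) ^ m) with (RtoC 1 / z ^ m)
    by (transitivity ((c + RtoC 1) ^ m * z ^ m / z ^ m);
        [rewrite c1_pow_mul_z_pow; reflexivity | field; auto]).
  field. auto.
Qed.

Lemma Sdouble_degenerate :
  (c + RtoC 1) ^ (S m) / ((CofNat (S n) + b) * c) * Sdouble n a b c
  = (CofNat (S (S n)) + b) / ((b + RtoC 1) * (c + RtoC 1))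
      * F32 (RtoC 1) (RtoC 1) (CofNat (S (S (S n))) + b) (RtoC 2) (b + RtoC 2)
            (RtoC 1 / (c + RtoC 1))
    + (Cdigamma (CofNat (S (S n)) + b) - Cdigamma (b + RtoC 1))
    + Clog (c / (c + RtoC 1))
    - Csum m (fun l =>
        (c + RtoC 1) ^ (S l) / CofNat (S l)
        * (Cpoch (b + RtoC 1 - CofNat (S l)) (S n) / Cpoch (b + RtoC 1) (S n) - RtoC 1)).
Proof.
  set (pre := (CofNat (S (S n)) + b) / ((b + RtoC 1) * (c + RtoC 1))).
  set (L := (c + RtoC 1) / c * Sdouble n a b c / (CofNat (S n) + b)).
  assert (Hc1 := c1_neq0 c Hc). assert (Hc0 := c_neq0 c Hc).
  assert (HN := nb_neq0 n b Hb). assert (Hy := b1_neq0 b Hb).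
  assert (Hn2 : CofNat (S (S n)) + b <> RtoC 0) by (apply (nb_neq0 (S n)); auto).
  assert (Hpre : pre <> RtoC 0) by (apply Cdiv_neq0; [|apply Cmul_neq0]; auto).
  rewrite Cdigamma_diff_degenerate.
  replace (c / (c + RtoC 1)) with (RtoC 1 - z) by (unfold z; field; auto).
  assert (HF : Cseries_cv
                 (F32_term (RtoC 1) (RtoC 1) (CofNat (S (S (S n))) + b) (RtoC 2) (b + RtoC 2) z)
                 (RtoC 1 / pre * ((c + RtoC 1) ^ m * (L - Csum (S m) u) + - Clog (RtoC 1 - z)))).
  { eapply Cseries_cv_ext.
    2:{ apply Cseries_cv_scal, Cseries_cv_add;
        [apply Cseries_cv_scal, Cseries_cv_shift, Sdouble_generating; auto
        | apply log_series, inv_c1_norm_lt1; auto]. }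
    intros k. cbv beta. rewrite <- F32_term_gen_tail. fold pre. field. auto. }
  fold z. rewrite (F32_eq _ _ _ _ _ _ _ HF).
  change (Csum (S m) u) with (Csum m u + u m).
  replace ((c + RtoC 1) ^ m * (L - (Csum m u + u m)))
    with ((c + RtoC 1) ^ m * L - (c + RtoC 1) ^ m * Csum m u - (c + RtoC 1) ^ m * u m) by ring.
  rewrite gen_terms_below, gen_term_diag. unfold L, PY.
  change ((c + RtoC 1) ^ S m) with ((c + RtoC 1) ^ m * (c + RtoC 1)).
  field. repeat split; auto.
Qed.

End Degenerate.

Theorem theorem2 (n : nat) (a b c : Cx)
  (Hb : forall k : nat, b <> - CofNat (S k)) :
  (* (i) *)
  (c <> RtoC 0 ->
     Sdouble n a b c / (CofNat (S n) + b)
     = Csum (S n) (fun k => Csum (S k) (fun j =>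
         (Cbinom (CofNat k + a) j / Cbinom (CofNat (S k) + b) k)
         * (c ^ j / c ^ k))) / (b + RtoC 1))
  /\
  (* (ii) *)
  ((1 < Cnorm (c + RtoC 1))%R ->
   (forall k : nat, a - b <> - CofNat k) ->
   (forall k : nat, a <> - CofNat (S k)) ->
     ((a - b) * (c + RtoC 1)) / ((CofNat (S n) + b) * c) * Sdouble n a b c
     = Cpoch (a + RtoC 1) (S n) / Cpoch (b + RtoC 1) (S n)
         * F32 (RtoC 1) (a - b) (CofNat (S (S n)) + a) (a - b + RtoC 1) (a + RtoC 1)
               (RtoC 1 / (c + RtoC 1))
       - F21 (RtoC 1) (a - b) (a - b + RtoC 1) (RtoC 1 / (c + RtoC 1)))
  /\
  (* (iii) *)
  (forall m : nat, (1 < Cnorm (c + RtoC 1))%R -> a = b - CofNat m ->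
     (c + RtoC 1) ^ (S m) / ((CofNat (S n) + b) * c) * Sdouble n a b c
     = (CofNat (S (S n)) + b) / ((b + RtoC 1) * (c + RtoC 1))
         * F32 (RtoC 1) (RtoC 1) (CofNat (S (S (S n))) + b) (RtoC 2) (b + RtoC 2)
               (RtoC 1 / (c + RtoC 1))
       + (Cdigamma (CofNat (S (S n)) + b) - Cdigamma (b + RtoC 1))
       + Clog (c / (c + RtoC 1))
       - Csum m (fun l =>
           (c + RtoC 1) ^ (S l) / CofNat (S l)
           * (Cpoch (b + RtoC 1 - CofNat (S l)) (S n) / Cpoch (b + RtoC 1) (S n)
              - RtoC 1))).
Proof.
  split; [|split].
  - apply Sdouble_dual, Hb.
  - intros Hc Hab Ha. apply Sdouble_hypergeometric; auto.
  - intros m Hc ->. apply Sdouble_degenerate; auto.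
Qed.
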